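(* Let $q$ be a prime, $m\in\mathbb Z$, $n\in\mathbb N$ with $\gcd(m,n)=1$, and let $\Phi_q:\mathbb Z\to\mathbb F_q$ be the quotient map; when $q\nmid n$, let $[m/n]_q\in\mathbb F_q$ be the element with $\Phi_q(n)[m/n]_q=\Phi_q(m)$. All convergences below are in $\mathbb A$. (b) The sets $U_{\mathbb R}$, $U_q$ and $\mu_{\mathbb Z(q)}(\mathbb F_q)\cup U_q$ are open in $\mathbb A^{\min}$. (c) The subspaces $\mu_{\mathbb Q_0}(\mathbb Q)$ and $\bigcup_{p}\mu_{\mathbb Z(p)}(\mathbb F_p)$ are discrete. (d) Let $(p_i,\omega_i)_{i\in\mathbb N}$ be a sequence in $\{\text{primes}\}\times(0,\infty)$ and $s_i\in\mathbb Q_{p_i}$. Then $\mu_{\mathbb Q_{p_i}^{\omega_i}}(s_i)\to\mu_{\mathbb Z(q)}(\Phi_q(n))$ if and only if $\omega_i\to\infty$ and there is $i_0$ such that for all $i\ge i_0$, $p_i=q$ and $s_i\in n+q\mathbb Z_q$, where $\mathbb Z_q=\{s\in\mathbb Q_q:|s|_q\le1\}$. (e) Let $(p_i,k_i)_{i\in\mathbb N}$ be a sequence in $\{\text{primes}\}\times\mathbb Z$. Then $\mu_{\mathbb Z(p_i)}(\Phi_{p_i}(k_i))\to\mu_{\mathbb Q_0}(m/n)$ if and only if $p_i\to\infty$ and there is $i_0$ with $\Phi_{p_i}(k_i)=[m/n]_{p_i}$ for all $i\ge i_0$. (f) Let $\upsilon_i\in(0,1]$ and $t_i\in\mathbb R$.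 Then $\mu_{\mathbb R_{\upsilon_i}}(t_i)\to\mu_{\mathbb Q_0}(m/n)$ if and only if $\upsilon_i\to0$ and $|t_i-m/n|^{\upsilon_i}\to0$ ($|\cdot|$ Euclidean). (g) Let $(p_i,\omega_i)$ be a sequence in $\{\text{primes}\}\times(0,\infty)$ and $s_i\in\mathbb Q_{p_i}$. Then $\mu_{\mathbb Q_{p_i}^{\omega_i}}(s_i)\to\mu_{\mathbb Q_0}(m/n)$ if and only if $|k|_{p_i}^{\omega_i}\to1$ for every $k\in\mathbb N$ and $|s_i-m/n|_{p_i}^{\omega_i}\to0$.
   Context: $\mathbb A$ is the set of non-zero multiplicative semi-norms on $\mathbb Z[t]$ with the topology of pointwise convergence on $\mathbb Z[t]$. For a complete valuation field $K$ and $s\in K$, $\mu_K(s)\in\mathbb A$ is $p\mapsto|p(s)|_K$. Minimal fields: $\mathbb Q_0$ ($\mathbb Q$ with trivial absolute value), $\mathbb Z(p)$ ($\mathbb F_p$ with trivial absolute value), $\mathbb R_\upsilon$ ($\mathbb R$ with $|x|^\upsilon$, $|\cdot|$ Euclidean, $\upsilon\in(0,1]$), $\mathbb Q_p^\omega$ ($\mathbb Q_p$ with $|x|_p^\omega$, $\omega>0$). $\mathbb A^{\min}$ is the union of $\mu_K(K)$ over all these minimal fields $K$, with the subspace topology from $\mathbb A$; $U_{\mathbb R}:=\bigcup_{\upsilon\in(0,1]}\mu_{\mathbb R_\upsilon}(\mathbb R)$ and $U_q:=\bigcup_{\omega\in(0,\infty)}\mu_{\mathbb Q_q^\omega}(\mathbb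 Q_q)$. *)

From Stdlib Require Export Reals QArith ZArith Znumtheory List ClassicalEpsilon.
Open Scope R_scope.

(* Elements of Z[t]: coefficient lists, constant coefficient first. *)
Definition poly := list Z.

Fixpoint evalZ (P : poly) (x : Z) : Z :=
  match P with nil => 0%Z | c :: P' => (c + x * evalZ P' x)%Z end.
Fixpoint evalQ (P : poly) (x : Q) : Q :=
  match P with nil => 0%Q | c :: P' => (inject_Z c + x * evalQ P' x)%Q end.
Fixpoint evalR (P : poly) (x : R) : R :=
  match P with nil => 0 | c :: P' => IZR c + x * evalR P' x end.

(* p-adic valuation of a nonzero integer (fuel |z| suffices for p >= 2). *)
Fixpoint vfuel (fuel : nat) (p z : Z) : Z :=
  match fuel with
  | O => 0%Z
  | S f => if Z.eqb z 0 then 0%Z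
           else if Z.eqb (Z.modulo z p) 0 then (1 + vfuel f p (Z.div z p))%Z
           else 0%Z
  end.
Definition vZ (p z : Z) : Z := vfuel (Z.to_nat (Z.abs z)) p z.

Definition padic_abs (p : Z) (x : Q) : R :=
  if Qeq_bool x 0 then 0
  else powerRZ (IZR p) (- (vZ p (Qnum x) - vZ p (Zpos (Qden x))))%Z.

Definition Lim (u : nat -> R) : R := epsilon (inhabits 0) (fun l => Un_cv u l).

(* Q_p is modelled as the completion of Q: an element of Q_p is represented
   by a |.|_p-Cauchy sequence of rationals. *)
Definition padic_cauchy (p : Z) (u : nat -> Q) : Prop :=
  forall eps, eps > 0 -> exists N, forall a b, (N <= a)%nat -> (N <= b)%nat ->
    padic_abs p (u a - u b)%Q < eps.

Definition qp_abs (p : Z) (u : nat -> Q) : R := Lim (fun k => padic_abs p (u k)).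

Definition rpow (x a : R) : R := if Req_EM_T x 0 then 0 else Rpower x a.

Definition seminorm := poly -> R.

Definition mu_Q0 (r : Q) : seminorm :=
  fun P => if Qeq_bool (evalQ P r) 0 then 0 else 1.
Definition mu_Fp (p k : Z) : seminorm :=
  fun P => if Z.eqb (Z.modulo (evalZ P k) p) 0 then 0 else 1.
Definition mu_R (v t : R) : seminorm := fun P => rpow (Rabs (evalR P t)) v.
Definition mu_Qp (p : Z) (w : R) (u : nat -> Q) : seminorm :=
  fun P => rpow (qp_abs p (fun k => evalQ P (u k))) w.

Definition sn_eq (f g : seminorm) : Prop := forall P, f P = g P.

Definition Q0_pts (f : seminorm) : Prop := exists r, sn_eq f (mu_Q0 r).
Definition Fp_pts (p : Z) (f : seminorm) : Prop := exists k, sn_eq f (mu_Fp p k).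
Definition U_R (f : seminorm) : Prop :=
  exists v t, 0 < v <= 1 /\ sn_eq f (mu_R v t).
Definition U_Qp (q : Z) (f : seminorm) : Prop :=
  exists w u, 0 < w /\ padic_cauchy q u /\ sn_eq f (mu_Qp q w u).

Definition Amin (f : seminorm) : Prop :=
  Q0_pts f \/ (exists p, prime p /\ Fp_pts p f) \/ U_R f \/
  (exists p, prime p /\ U_Qp p f).

(* openness in A^min for the subspace topology of pointwise convergence *)
Definition open_in_Amin (U : seminorm -> Prop) : Prop :=
  forall f, U f -> exists (Ps : list poly) (eps : R), 0 < eps /\
    forall g, Amin g -> (forall P, In P Ps -> Rabs (g P - f P) < eps) -> U g.

Definition discrete_subspace (S : seminorm -> Prop) : Prop :=
  forall f, S f -> exists (Ps : list poly) (eps : R), 0 < eps /\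
    forall g, S g -> (forall P, In P Ps -> Rabs (g P - f P) < eps) -> sn_eq g f.

Definition sn_conv (F : nat -> seminorm) (f : seminorm) : Prop :=
  forall P, Un_cv (fun i => F i P) (f P).

Definition in_n_plus_qZq (q n : Z) (u : nat -> Q) : Prop :=
  exists z, padic_cauchy q z /\ qp_abs q z <= 1 /\
    qp_abs q (fun k => u k - (inject_Z n + inject_Z q * z k))%Q = 0.

Definition frac_Q (m : Z) (n : nat) : Q := (inject_Z m / inject_Z (Z.of_nat n))%Q.

(* The test polynomials [q], [2] and [n t - m] separate the points of A^min:
   only F_q and Q_q take a value below 1 at the constant [q], only the real
   points take a value above 1 at [2], and [n t - m] vanishes exactly at [m/n].
   For a general polynomial P the convergence criteria then follow from three
   facts: the non-archimedean Lipschitz bound |P(x) - P(c)| <= C^deg P |x - c|,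
   the dominance |a + b| = |a| when |b| < |a|, and the integer
   n^deg P * P(m/n), which is nonzero whenever P(m/n) is and so is divisible by
   only finitely many primes. *)

From Stdlib Require Import Qreals Qfield Lra Lia Psatz FunctionalExtensionality.
Open Scope R_scope.

(** * p-adic valuations and absolute values *)

Section IntegerValuation.
Local Open Scope Z_scope.

Lemma vfuel_spec fuel p z : 2 <= p -> z <> 0 -> (Z.to_nat (Z.abs z) <= fuel)%nat ->
  0 <= vfuel fuel p z /\ exists r, z = p ^ vfuel fuel p z * r /\ ~ (p | r).
Proof.
  revert z; induction fuel as [|f IH]; intros z Hp Hz Hf; [lia|].
  cbn [vfuel]. destruct (Z.eqb_spec z 0) as [|_]; [contradiction|].
  destruct (Z.eqb_spec (z mod p) 0) as [Hmod|Hmod].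
  - assert (Hzp : z = p * (z / p)) by (apply Z_div_exact_full_2; lia).
    assert (Hq : z / p <> 0) by (intro E; rewrite E in Hzp; lia).
    assert (Hfq : (Z.to_nat (Z.abs (z / p)) <= f)%nat).
    { assert (Z.abs z = p * Z.abs (z / p)) by (rewrite Hzp at 1; rewrite Z.abs_mul; lia).
      nia. }
    destruct (IH (z / p) Hp Hq Hfq) as [H0 [r [Hr Hndiv]]].
    split; [lia|]. exists r. split; [|exact Hndiv].
    rewrite Z.pow_add_r, Z.pow_1_r by lia. rewrite Hzp at 1. rewrite Hr at 1. ring.
  - split; [lia|]. exists z. split; [ring|].
    rewrite <- Z.mod_divide by lia. exact Hmod.
Qed.

Lemma vZ_spec p z : 2 <= p -> z <> 0 ->
  0 <= vZ p z /\ exists r, z = p ^ vZ p z * r /\ ~ (p | r).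
Proof. intros; apply vfuel_spec; auto. Qed.

Lemma vZ_ge0 p z : 2 <= p -> 0 <= vZ p z.
Proof. intros. destruct (Z.eq_dec z 0); [subst; reflexivity|]. apply vZ_spec; auto. Qed.

Lemma Zpow_mul_unique p a b r s : 2 <= p -> 0 <= a -> 0 <= b ->
  p ^ a * r = p ^ b * s -> ~ (p | r) -> ~ (p | s) -> a = b.
Proof.
  intros Hp.
  assert (lt_absurd : forall a' b' r' s', 0 <= a' -> a' < b' ->
            p ^ a' * r' = p ^ b' * s' -> ~ (p | r') -> False).
  { clear a b r s. intros a b r s Ha Hab E Hr. apply Hr.
    replace b with (a + Z.succ (b - a - 1)) in E by lia.
    rewrite Z.pow_add_r, Z.pow_succ_r in E by lia.
    assert (p ^ a <> 0) by (apply Z.pow_nonzero; lia).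
    exists (p ^ (b - a - 1) * s). nia. }
  intros Ha Hb E Hr Hs. destruct (Z.lt_trichotomy a b) as [H|[H|H]]; auto.
  - exfalso. exact (lt_absurd a b r s Ha H E Hr).
  - exfalso. exact (lt_absurd b a s r Hb H (eq_sym E) Hs).
Qed.

Lemma vZ_pow_mul p k r : 2 <= p -> 0 <= k -> ~ (p | r) -> vZ p (p ^ k * r) = k.
Proof.
  intros Hp Hk Hr.
  assert (Hz : p ^ k * r <> 0).
  { intro E. apply Z.mul_eq_0 in E as [E|E].
    - revert E. apply Z.pow_nonzero; lia.
    - subst. apply Hr, Z.divide_0_r. }
  destruct (vZ_spec p _ Hp Hz) as [H0 [s [Hs Hndiv]]].
  apply (Zpow_mul_unique p _ _ s r); auto.
Qed.

Lemma vZ_pow p k : 2 <= p -> 0 <= k -> vZ p (p ^ k) = k.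
Proof.
  intros Hp Hk. rewrite <- (Z.mul_1_r (p ^ k)). apply vZ_pow_mul; auto.
  intro H. apply Z.divide_1_r_nonneg in H; lia.
Qed.

Lemma vZ_coprime p z : 2 <= p -> ~ (p | z) -> vZ p z = 0.
Proof. intros. rewrite <- (Z.mul_1_l z). apply (vZ_pow_mul p 0); auto; lia. Qed.

Lemma vZ_one p : 2 <= p -> vZ p 1 = 0.
Proof.
  intros Hp. apply vZ_coprime; auto. intro H. apply Z.divide_1_r_nonneg in H; lia.
Qed.

Lemma vZ_mul p a b : prime p -> a <> 0 -> b <> 0 -> vZ p (a * b) = vZ p a + vZ p b.
Proof.
  intros Hp Ha Hb. pose proof (prime_ge_2 p Hp) as H2.
  destruct (vZ_spec p a H2 Ha) as [Ha0 [r [Hr Hrp]]].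
  destruct (vZ_spec p b H2 Hb) as [Hb0 [s [Hs Hsp]]].
  rewrite Hr at 1. rewrite Hs at 1.
  replace (p ^ vZ p a * r * (p ^ vZ p b * s)) with (p ^ (vZ p a + vZ p b) * (r * s))
    by (rewrite Z.pow_add_r by lia; ring).
  apply vZ_pow_mul; [lia|lia|]. intro E. apply prime_mult in E as [E|E]; auto.
Qed.

Lemma vZ_opp p z : prime p -> vZ p (- z) = vZ p z.
Proof.
  intros Hp. pose proof (prime_ge_2 p Hp).
  destruct (Z.eq_dec z 0) as [->|Hz]; [reflexivity|].
  replace (- z) with (-1 * z) by ring. rewrite vZ_mul by (auto; lia).
  rewrite vZ_coprime; [lia|lia|]. intro E. apply Z.divide_opp_r, Z.divide_1_r_nonneg in E; lia.
Qed.

Lemma divide_iff_vZ_pos p z : prime p -> z <> 0 -> (p | z) <-> 1 <= vZ p z.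
Proof.
  intros Hp Hz. pose proof (prime_ge_2 p Hp).
  destruct (vZ_spec p z H Hz) as [H0 [r [Hr Hrp]]]. split.
  - intros Hd. destruct (Z.eq_dec (vZ p z) 0) as [E|E]; [|lia].
    rewrite E, Z.pow_0_r, Z.mul_1_l in Hr. subst r. contradiction.
  - intros Hv. rewrite Hr. apply Z.divide_mul_l.
    replace (vZ p z) with (Z.succ (vZ p z - 1)) by lia. rewrite Z.pow_succ_r by lia.
    apply Z.divide_mul_l, Z.divide_refl.
Qed.

Lemma vZ_add p a b : prime p -> a <> 0 -> b <> 0 -> a + b <> 0 ->
  Z.min (vZ p a) (vZ p b) <= vZ p (a + b).
Proof.
  intros Hp Ha Hb Hab. pose proof (prime_ge_2 p Hp) as H2.
  destruct (vZ_spec p a H2 Ha) as [Ha0 [r [Hr _]]].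
  destruct (vZ_spec p b H2 Hb) as [Hb0 [s [Hs _]]].
  set (k := Z.min (vZ p a) (vZ p b)).
  set (c := p ^ (vZ p a - k) * r + p ^ (vZ p b - k) * s).
  assert (E : a + b = p ^ k * c).
  { unfold c. rewrite Hr at 1. rewrite Hs at 1.
    replace (vZ p a) with (k + (vZ p a - k)) at 1 by lia.
    replace (vZ p b) with (k + (vZ p b - k)) at 1 by lia.
    rewrite !Z.pow_add_r by lia. ring. }
  assert (Hc : c <> 0) by (intro H; rewrite H in E; lia).
  rewrite E, vZ_mul, vZ_pow; auto; [pose proof (vZ_ge0 p c H2); lia|lia|].
  apply Z.pow_nonzero; lia.
Qed.

End IntegerValuation.

Lemma inject_Z_eq0 z : (inject_Z z == 0)%Q <-> z = 0%Z.
Proof. unfold Qeq. simpl. lia. Qed.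

Definition Qval (p : Z) (x : Q) : Z := (vZ p (Qnum x) - vZ p (Zpos (Qden x)))%Z.

Lemma padic_abs_0 p x : (x == 0)%Q -> padic_abs p x = 0.
Proof. intros H. unfold padic_abs. apply Qeq_bool_iff in H. rewrite H. reflexivity. Qed.

Lemma padic_abs_Qval p x : ~ (x == 0)%Q -> padic_abs p x = powerRZ (IZR p) (- Qval p x).
Proof.
  intros H. unfold padic_abs. destruct (Qeq_bool x 0) eqn:E; [|reflexivity].
  apply Qeq_bool_iff in E. contradiction.
Qed.

Section PadicAbs.
Variable p : Z.
Hypothesis Hp : prime p.

Let p_gt1 : 1 < IZR p.
Proof. apply IZR_lt. pose proof (prime_ge_2 p Hp). lia. Qed.

Lemma powerRZ_p_lt a b : (a < b)%Z -> powerRZ (IZR p) a < powerRZ (IZR p) b.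
Proof. intros. rewrite !powerRZ_Rpower by lra. apply Rpower_lt; [lra|]. apply IZR_lt; auto. Qed.

Lemma powerRZ_p_le a b : (a <= b)%Z -> powerRZ (IZR p) a <= powerRZ (IZR p) b.
Proof. intros. destruct (Z.eq_dec a b); [subst; lra|]. left; apply powerRZ_p_lt; lia. Qed.

Lemma powerRZ_p_lt_inv a b : powerRZ (IZR p) a < powerRZ (IZR p) b -> (a < b)%Z.
Proof. intros. destruct (Z_lt_le_dec a b); auto. apply powerRZ_p_le in l. lra. Qed.

Lemma Qval_Qeq x y : (x == y)%Q -> ~ (x == 0)%Q -> Qval p x = Qval p y.
Proof.
  destruct x as [a b], y as [c d]. unfold Qeq, Qval. simpl. intros E Hx.
  assert (a <> 0%Z) by (intro; apply Hx; unfold Qeq; simpl; lia).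
  assert (c <> 0%Z) by (intro; subst; lia).
  assert (V : vZ p (a * Zpos d) = vZ p (c * Zpos b)) by (rewrite E; auto).
  rewrite !vZ_mul in V by (auto; lia). lia.
Qed.

Lemma Qval_mul x y : ~ (x == 0)%Q -> ~ (y == 0)%Q -> Qval p (x * y) = (Qval p x + Qval p y)%Z.
Proof.
  destruct x as [a b], y as [c d]. unfold Qeq. simpl. intros Hx Hy.
  unfold Qval, Qmult. simpl. rewrite Pos2Z.inj_mul, !vZ_mul by (auto; lia). lia.
Qed.

Lemma Qval_add x y : ~ (x == 0)%Q -> ~ (y == 0)%Q -> ~ (x + y == 0)%Q ->
  (Z.min (Qval p x) (Qval p y) <= Qval p (x + y))%Z.
Proof.
  destruct x as [a b], y as [c d]. unfold Qeq, Qplus, Qval. simpl. intros Hx Hy Hxy.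
  rewrite Pos2Z.inj_mul, vZ_mul by (auto; lia).
  pose proof (vZ_add p (a * Zpos d) (c * Zpos b) Hp ltac:(lia) ltac:(lia) ltac:(lia)) as V.
  rewrite !vZ_mul in V by (auto; lia). lia.
Qed.

Lemma Qval_inject_Z z : Qval p (inject_Z z) = vZ p z.
Proof.
  unfold Qval. simpl. rewrite vZ_one by (apply prime_ge_2; auto). lia.
Qed.

Lemma Qval_opp x : Qval p (- x) = Qval p x.
Proof. destruct x as [a b]. unfold Qval. simpl. rewrite vZ_opp; auto. Qed.

Lemma padic_abs_ge0 x : 0 <= padic_abs p x.
Proof.
  destruct (Qeq_dec x 0); [rewrite padic_abs_0; auto; lra|].
  rewrite padic_abs_Qval; auto. apply powerRZ_le. lra.
Qed.

Lemma padic_abs_Qeq x y : (x == y)%Q -> padic_abs p x = padic_abs p y.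
Proof.
  intros E. destruct (Qeq_dec x 0) as [H|H].
  - rewrite !padic_abs_0; auto. rewrite <- E; auto.
  - assert (~ (y == 0)%Q) by (rewrite <- E; auto).
    rewrite !padic_abs_Qval, (Qval_Qeq x y); auto.
Qed.

Lemma padic_abs_mul x y : padic_abs p (x * y) = padic_abs p x * padic_abs p y.
Proof.
  destruct (Qeq_dec x 0) as [Hx|Hx].
  - rewrite (padic_abs_0 p x), padic_abs_0; [ring|rewrite Hx; ring|auto].
  - destruct (Qeq_dec y 0) as [Hy|Hy].
    + rewrite (padic_abs_0 p y), padic_abs_0; [ring|rewrite Hy; ring|auto].
    + assert (~ (x * y == 0)%Q) by (intro E; apply Qmult_integral in E; tauto).
      rewrite !padic_abs_Qval, Qval_mul, <- powerRZ_add by (auto; lra). f_equal. lia.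
Qed.

Lemma padic_abs_opp x : padic_abs p (- x) = padic_abs p x.
Proof.
  destruct (Qeq_dec x 0) as [H|H].
  - rewrite !padic_abs_0; auto. rewrite H; reflexivity.
  - assert (~ (- x == 0)%Q) by (intro E; apply H; rewrite <- (Qopp_involutive x), E; reflexivity).
    rewrite !padic_abs_Qval, Qval_opp; auto.
Qed.

Lemma padic_abs_ultra x y : padic_abs p (x + y) <= Rmax (padic_abs p x) (padic_abs p y).
Proof.
  destruct (Qeq_dec x 0) as [Hx|Hx].
  { rewrite (padic_abs_Qeq (x + y) y), (padic_abs_0 p x) by (auto; rewrite Hx; ring). apply Rmax_r. }
  destruct (Qeq_dec y 0) as [Hy|Hy].
  { rewrite (padic_abs_Qeq (x + y) x) by (rewrite Hy; ring). apply Rmax_l. }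
  destruct (Qeq_dec (x + y) 0) as [Hxy|Hxy].
  { rewrite padic_abs_0 by auto. eapply Rle_trans; [apply padic_abs_ge0|apply Rmax_l]. }
  rewrite !padic_abs_Qval by auto. pose proof (Qval_add x y Hx Hy Hxy).
  destruct (Z.le_ge_cases (Qval p x) (Qval p y)).
  - eapply Rle_trans; [|apply Rmax_l]. apply powerRZ_p_le. lia.
  - eapply Rle_trans; [|apply Rmax_r]. apply powerRZ_p_le. lia.
Qed.

Lemma padic_abs_triangle x y : padic_abs p (x + y) <= padic_abs p x + padic_abs p y.
Proof.
  pose proof (padic_abs_ultra x y). pose proof (padic_abs_ge0 x). pose proof (padic_abs_ge0 y).
  unfold Rmax in *. destruct (Rle_dec _ _); lra.
Qed.

Lemma padic_abs_reverse_triangle x y :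
  Rabs (padic_abs p x - padic_abs p y) <= padic_abs p (x - y).
Proof.
  pose proof (padic_abs_triangle (x - y) y) as H1.
  pose proof (padic_abs_triangle (- (x - y)) x) as H2.
  rewrite (padic_abs_Qeq (x - y + y) x) in H1 by ring.
  rewrite (padic_abs_Qeq (- (x - y) + x) y), padic_abs_opp in H2 by ring.
  apply Rabs_le. lra.
Qed.

Lemma padic_abs_dominant x y : padic_abs p y < padic_abs p x -> padic_abs p (x + y) = padic_abs p x.
Proof.
  intros H. pose proof (padic_abs_ultra x y) as H1.
  pose proof (padic_abs_ultra (x + y) (- y)) as H2.
  rewrite padic_abs_opp, (padic_abs_Qeq (x + y + - y) x) in H2 by ring.
  unfold Rmax in *. destruct (Rle_dec (padic_abs p x) (padic_abs p y)); [lra|].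
  destruct (Rle_dec (padic_abs p (x + y)) (padic_abs p y)); lra.
Qed.

Lemma padic_abs_le1_of_sub x c :
  padic_abs p c <= 1 -> padic_abs p (x - c) <= 1 -> padic_abs p x <= 1.
Proof.
  intros. rewrite (padic_abs_Qeq x ((x - c) + c)) by ring.
  eapply Rle_trans; [apply padic_abs_ultra|]. apply Rmax_lub; auto.
Qed.

(* The value group is p^Z, so an absolute value below 1 is at most 1/p. *)
Lemma padic_abs_lt1 x : padic_abs p x < 1 -> padic_abs p x <= / IZR p.
Proof.
  intros H. destruct (Qeq_dec x 0).
  - rewrite padic_abs_0 by auto. left. apply Rinv_0_lt_compat. lra.
  - rewrite padic_abs_Qval in * by auto. change 1 with (powerRZ (IZR p) 0) in H.
    apply powerRZ_p_lt_inv in H.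
    replace (/ IZR p) with (powerRZ (IZR p) (-1)) by (simpl; rewrite Rmult_1_r; reflexivity).
    apply powerRZ_p_le. lia.
Qed.

Lemma padic_abs_Z_le1 z : padic_abs p (inject_Z z) <= 1.
Proof.
  destruct (Qeq_dec (inject_Z z) 0); [rewrite padic_abs_0; auto; lra|].
  rewrite padic_abs_Qval, Qval_inject_Z by auto. change 1 with (powerRZ (IZR p) 0).
  apply powerRZ_p_le. pose proof (vZ_ge0 p z (prime_ge_2 p Hp)). lia.
Qed.

Lemma padic_abs_Z_coprime z : ~ (p | z)%Z -> padic_abs p (inject_Z z) = 1.
Proof.
  intros H. rewrite padic_abs_Qval, Qval_inject_Z, vZ_coprime; auto.
  - apply prime_ge_2; auto.
  - rewrite inject_Z_eq0. intros ->. apply H, Z.divide_0_r.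
Qed.

Lemma padic_abs_Z_divide z : (p | z)%Z -> padic_abs p (inject_Z z) <= / IZR p.
Proof.
  intros H. apply padic_abs_lt1. destruct (Z.eq_dec z 0) as [->|Hz].
  - rewrite padic_abs_0 by reflexivity. lra.
  - rewrite padic_abs_Qval, Qval_inject_Z by (rewrite inject_Z_eq0; auto).
    apply divide_iff_vZ_pos in H; auto. change 1 with (powerRZ (IZR p) 0).
    apply powerRZ_p_lt. lia.
Qed.

Lemma padic_abs_p : padic_abs p (inject_Z p) = / IZR p.
Proof.
  pose proof (prime_ge_2 p Hp).
  rewrite padic_abs_Qval, Qval_inject_Z by (rewrite inject_Z_eq0; lia).
  pose proof (vZ_pow p 1 ltac:(lia) ltac:(lia)) as V. rewrite Z.pow_1_r in V.
  rewrite V. simpl. rewrite Rmult_1_r. reflexivity.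
Qed.

Lemma padic_abs_inv_p : padic_abs p (/ inject_Z p) = IZR p.
Proof.
  pose proof (prime_ge_2 p Hp).
  assert (E : padic_abs p (inject_Z p * / inject_Z p) = 1).
  { rewrite (padic_abs_Qeq _ (inject_Z 1)).
    - apply padic_abs_Z_coprime. intro H1. apply Z.divide_1_r_nonneg in H1; lia.
    - field. rewrite inject_Z_eq0. lia. }
  rewrite padic_abs_mul, padic_abs_p in E. apply (Rmult_eq_reg_l (/ IZR p)).
  - rewrite E. field. lra.
  - apply Rinv_neq_0_compat. lra.
Qed.

End PadicAbs.

Definition eventually (P : nat -> Prop) : Prop := exists K, forall k, (K <= k)%nat -> P k.

Lemma eventually_and (P Q : nat -> Prop) :
  eventually P -> eventually Q -> eventually (fun k => P k /\ Q k).
Proof. intros [K1 H1] [K2 H2]. exists (max K1 K2). intros k Hk. split; [apply H1|apply H2]; lia. Qed.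

Lemma eventually_mono (P Q : nat -> Prop) :
  (forall k, P k -> Q k) -> eventually P -> eventually Q.
Proof. intros H [K HK]. exists K. auto. Qed.

Lemma Lim_unique u l : Un_cv u l -> Lim u = l.
Proof.
  intros H. unfold Lim.
  pose proof (epsilon_spec (inhabits 0) (fun l => Un_cv u l) (ex_intro _ l H)) as Hl.
  eapply UL_sequence; eauto.
Qed.

Lemma cv_eventually_ext a b l : eventually (fun k => a k = b k) -> Un_cv a l -> Un_cv b l.
Proof.
  intros [K HK] H eps He. destruct (H eps He) as [N HN]. exists (max K N). intros k Hk.
  rewrite <- HK by lia. apply HN. lia.
Qed.

Lemma cv_ext a b l : (forall k, a k = b k) -> Un_cv a l -> Un_cv b l.
Proof. intros E. apply cv_eventually_ext. exists O. auto. Qed.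

Lemma cv_eventually_const a c : eventually (fun k => a k = c) -> Un_cv a c.
Proof.
  intros H. apply (cv_eventually_ext (fun _ => c)).
  - apply (eventually_mono _ _ (fun k E => eq_sym E) H).
  - intros eps He. exists O. intros. unfold R_dist. rewrite Rminus_diag, Rabs_R0. auto.
Qed.

Lemma cv_const c : Un_cv (fun _ => c) c.
Proof. apply cv_eventually_const. exists O. auto. Qed.

Lemma cv_eventually_lt a l c : Un_cv a l -> l < c -> eventually (fun k => a k < c).
Proof.
  intros H Hl. destruct (H (c - l)) as [N HN]; [lra|]. exists N. intros k Hk.
  specialize (HN k Hk). unfold R_dist in HN. apply Rabs_def2 in HN. lra.
Qed.

Lemma cv_eventually_gt a l c : Un_cv a l -> c < l -> eventually (fun k => c < a k).
Proof.
  intros H Hl. destruct (H (l - c)) as [N HN]; [lra|]. exists N. intros k Hk.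
  specialize (HN k Hk). unfold R_dist in HN. apply Rabs_def2 in HN. lra.
Qed.

Lemma cv_le_eventually a b A B :
  eventually (fun k => a k <= b k) -> Un_cv a A -> Un_cv b B -> A <= B.
Proof.
  intros H Ha Hb. destruct (Rle_dec A B) as [|HAB]; auto. exfalso.
  destruct (eventually_and _ _ H
    (eventually_and _ _ (cv_eventually_gt a A ((A + B) / 2) Ha ltac:(lra))
                        (cv_eventually_lt b B ((A + B) / 2) Hb ltac:(lra)))) as [K HK].
  specialize (HK K (le_n K)). lra.
Qed.

Lemma cv_squeeze a b c l : eventually (fun k => a k <= b k <= c k) ->
  Un_cv a l -> Un_cv c l -> Un_cv b l.
Proof.
  intros [K HK] Ha Hc eps He. destruct (Ha eps He) as [N1 H1]. destruct (Hc eps He) as [N2 H2].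
  exists (max K (max N1 N2)). intros k Hk. specialize (HK k ltac:(lia)).
  specialize (H1 k ltac:(lia)). specialize (H2 k ltac:(lia)). unfold R_dist in *.
  apply Rabs_def2 in H1. apply Rabs_def2 in H2. apply Rabs_def1; lra.
Qed.

Lemma cv_squeeze0 a b : eventually (fun k => 0 <= a k <= b k) -> Un_cv b 0 -> Un_cv a 0.
Proof. intros H. apply (cv_squeeze (fun _ => 0)); auto using cv_const. Qed.

Lemma cv_Rmax a b A B : Un_cv a A -> Un_cv b B -> Un_cv (fun k => Rmax (a k) (b k)) (Rmax A B).
Proof.
  intros Ha Hb eps He.
  destruct (Ha eps He) as [N1 H1]. destruct (Hb eps He) as [N2 H2].
  exists (max N1 N2). intros k Hk. specialize (H1 k ltac:(lia)). specialize (H2 k ltac:(lia)).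
  unfold R_dist in *. apply Rabs_def2 in H1. apply Rabs_def2 in H2.
  apply Rabs_def1; unfold Rmax; repeat destruct Rle_dec; lra.
Qed.

Lemma cv_01_eventually_const a l : (forall k, a k = 0 \/ a k = 1) -> (l = 0 \/ l = 1) ->
  Un_cv a l -> eventually (fun k => a k = l).
Proof.
  intros Ha Hl H. apply (eventually_mono (fun k => Rabs (a k - l) < 1 / 2)).
  - intros k Hk. apply Rabs_def2 in Hk. destruct (Ha k), Hl; lra.
  - destruct (H (1 / 2)) as [N HN]; [lra|]. exists N. exact HN.
Qed.

Lemma cv0_of_mul_cv1 x y : (forall k, 0 <= x k) -> Un_cv y 1 ->
  Un_cv (fun k => x k * y k) 0 -> Un_cv x 0.
Proof.
  intros Hx Hy Hxy. apply (cv_squeeze0 _ (fun k => 2 * (x k * y k))).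
  - apply (eventually_mono (fun k => 1 / 2 < y k)).
    + intros k Hk. specialize (Hx k). nra.
    + apply (cv_eventually_gt _ _ _ Hy). lra.
  - replace 0 with (2 * 0) by ring. apply CV_mult; auto using cv_const.
Qed.

Lemma cv1_of_mul_cv1 x y : Un_cv y 1 -> Un_cv (fun k => x k * y k) 1 -> Un_cv x 1.
Proof.
  intros Hy Hxy eps He.
  destruct (Hy (Rmin (1 / 2) (eps / 4))) as [N1 H1]; [apply Rmin_pos; lra|].
  destruct (Hxy (eps / 4)) as [N2 H2]; [lra|].
  exists (max N1 N2). intros k Hk. specialize (H1 k ltac:(lia)). specialize (H2 k ltac:(lia)).
  unfold R_dist in *. pose proof (Rmin_l (1 / 2) (eps / 4)). pose proof (Rmin_r (1 / 2) (eps / 4)).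
  apply Rabs_def2 in H1. apply Rabs_def2 in H2. apply Rabs_def1.
  - destruct (Rle_dec (x k) 1); [lra|nra].
  - destruct (Rle_dec (x k) 1); [nra|lra].
Qed.

(** * The completion Q_p *)

Section PadicCompletion.
Variable p : Z.
Hypothesis Hp : prime p.

Lemma padic_abs_cv_qp_abs u : padic_cauchy p u -> Un_cv (fun k => padic_abs p (u k)) (qp_abs p u).
Proof.
  intros Hu.
  assert (Hc : Cauchy_crit (fun k => padic_abs p (u k))).
  { intros eps He. destruct (Hu eps He) as [N HN]. exists N. intros a b Ha Hb.
    eapply Rle_lt_trans; [apply padic_abs_reverse_triangle; auto|]. apply HN; auto. }
  destruct (R_complete _ Hc) as [l Hl]. unfold qp_abs. rewrite (Lim_unique _ l); auto.
Qed.

Lemma qp_abs_ext u v : (forall k, (u k == v k)%Q) -> qp_abs p u = qp_abs p v.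
Proof.
  intros E. unfold qp_abs. f_equal. apply functional_extensionality. intros k.
  apply padic_abs_Qeq; auto.
Qed.

Lemma qp_abs_eventually_const u c : eventually (fun k => padic_abs p (u k) = c) -> qp_abs p u = c.
Proof. intros. apply Lim_unique, cv_eventually_const. auto. Qed.

Lemma qp_abs_const c : qp_abs p (fun _ => c) = padic_abs p c.
Proof. apply qp_abs_eventually_const. exists O. auto. Qed.

Lemma qp_abs_le u c : padic_cauchy p u ->
  eventually (fun k => padic_abs p (u k) <= c) -> qp_abs p u <= c.
Proof. intros Hu H. apply (cv_le_eventually _ _ _ _ H (padic_abs_cv_qp_abs u Hu) (cv_const c)). Qed.

Lemma qp_abs_ge0 u : padic_cauchy p u -> 0 <= qp_abs p u.
Proof.
  intros Hu. apply (cv_le_eventually (fun _ => 0) (fun k => padic_abs p (u k))).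
  - exists O. intros. apply padic_abs_ge0; auto.
  - apply cv_const.
  - apply padic_abs_cv_qp_abs, Hu.
Qed.

Lemma qp_abs_lt_eventually u c : padic_cauchy p u -> qp_abs p u < c ->
  eventually (fun k => padic_abs p (u k) < c).
Proof. intros Hu. apply cv_eventually_lt, padic_abs_cv_qp_abs, Hu. Qed.

Lemma padic_cauchy_const c : padic_cauchy p (fun _ => c).
Proof. intros eps He. exists O. intros. rewrite padic_abs_0 by ring. auto. Qed.

Lemma padic_cauchy_add u v : padic_cauchy p u -> padic_cauchy p v ->
  padic_cauchy p (fun k => u k + v k)%Q.
Proof.
  intros Hu Hv eps He.
  destruct (Hu (eps / 2)) as [N1 H1]; [lra|]. destruct (Hv (eps / 2)) as [N2 H2]; [lra|].
  exists (max N1 N2). intros a b Ha Hb.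
  rewrite (padic_abs_Qeq p Hp _ ((u a - u b) + (v a - v b))%Q) by ring.
  eapply Rle_lt_trans; [apply padic_abs_triangle; auto|].
  specialize (H1 a b ltac:(lia) ltac:(lia)). specialize (H2 a b ltac:(lia) ltac:(lia)). lra.
Qed.

Lemma padic_cauchy_opp u : padic_cauchy p u -> padic_cauchy p (fun k => - u k)%Q.
Proof.
  intros Hu eps He. destruct (Hu eps He) as [N HN]. exists N. intros a b Ha Hb.
  rewrite (padic_abs_Qeq p Hp _ (- (u a - u b))%Q), padic_abs_opp by (auto; ring). auto.
Qed.

Lemma padic_cauchy_sub u v : padic_cauchy p u -> padic_cauchy p v ->
  padic_cauchy p (fun k => u k - v k)%Q.
Proof. intros Hu Hv. apply (padic_cauchy_add u (fun k => - v k)%Q Hu (padic_cauchy_opp v Hv)). Qed.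

Lemma padic_cauchy_sub_const u c : padic_cauchy p u -> padic_cauchy p (fun k => u k - c)%Q.
Proof. intros Hu. apply (padic_cauchy_sub u (fun _ => c) Hu (padic_cauchy_const _)). Qed.

Lemma padic_cauchy_bounded u : padic_cauchy p u ->
  exists B, 0 < B /\ eventually (fun k => padic_abs p (u k) <= B).
Proof.
  intros Hu. destruct (Hu 1) as [N HN]; [lra|]. exists (padic_abs p (u N) + 1). split.
  { pose proof (padic_abs_ge0 p Hp (u N)). lra. }
  exists N. intros a Ha. rewrite (padic_abs_Qeq p Hp _ ((u a - u N) + u N)%Q) by ring.
  eapply Rle_trans; [apply padic_abs_triangle; auto|]. specialize (HN a N Ha (le_n _)). lra.
Qed.

Lemma padic_cauchy_mul u v : padic_cauchy p u -> padic_cauchy p v ->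
  padic_cauchy p (fun k => u k * v k)%Q.
Proof.
  intros Hu Hv eps He.
  destruct (padic_cauchy_bounded u Hu) as [B1 [HB1 [N1 HN1]]].
  destruct (padic_cauchy_bounded v Hv) as [B2 [HB2 [N2 HN2]]].
  set (d := eps / (B1 + B2 + 1)).
  assert (Hd : 0 < d) by (unfold d; apply Rdiv_lt_0_compat; lra).
  assert (Hdeps : d * (B1 + B2 + 1) = eps) by (unfold d; field; lra).
  destruct (Hu d Hd) as [N3 H3]. destruct (Hv d Hd) as [N4 H4].
  exists (max (max N1 N2) (max N3 N4)). intros a b Ha Hb.
  rewrite (padic_abs_Qeq p Hp _ (u a * (v a - v b) + (u a - u b) * v b)%Q) by ring.
  eapply Rle_lt_trans; [apply padic_abs_triangle; auto|]. rewrite !padic_abs_mul by auto.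
  specialize (H3 a b ltac:(lia) ltac:(lia)). specialize (H4 a b ltac:(lia) ltac:(lia)).
  specialize (HN1 a ltac:(lia)). specialize (HN2 b ltac:(lia)).
  pose proof (padic_abs_ge0 p Hp (u a)). pose proof (padic_abs_ge0 p Hp (v b)).
  pose proof (padic_abs_ge0 p Hp (v a - v b)). pose proof (padic_abs_ge0 p Hp (u a - u b)).
  apply Rle_lt_trans with (B1 * d + d * B2); [|nra].
  apply Rplus_le_compat; apply Rmult_le_compat; lra.
Qed.

Lemma padic_cauchy_evalQ P u : padic_cauchy p u -> padic_cauchy p (fun k => evalQ P (u k)).
Proof.
  revert u. induction P as [|c P IH]; intros u Hu; simpl.
  - apply padic_cauchy_const.
  - apply (padic_cauchy_add (fun _ => inject_Z c)); [apply padic_cauchy_const|].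
    apply padic_cauchy_mul; auto.
Qed.

Lemma qp_abs_mul u v : padic_cauchy p u -> padic_cauchy p v ->
  qp_abs p (fun k => u k * v k)%Q = qp_abs p u * qp_abs p v.
Proof.
  intros Hu Hv. apply Lim_unique.
  apply (cv_ext (fun k => padic_abs p (u k) * padic_abs p (v k))).
  - intros. rewrite padic_abs_mul; auto.
  - apply CV_mult; apply padic_abs_cv_qp_abs; auto.
Qed.

Lemma qp_abs_scale c u : padic_cauchy p u -> qp_abs p (fun k => c * u k)%Q = padic_abs p c * qp_abs p u.
Proof.
  intros Hu. rewrite (qp_abs_mul (fun _ => c)), qp_abs_const; auto using padic_cauchy_const.
Qed.

Lemma qp_abs_ultra u v : padic_cauchy p u -> padic_cauchy p v ->
  qp_abs p (fun k => u k + v k)%Q <= Rmax (qp_abs p u) (qp_abs p v).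
Proof.
  intros Hu Hv.
  apply (Rle_cv_lim (Un := fun k => padic_abs p (u k + v k)%Q)
                    (Vn := fun k => Rmax (padic_abs p (u k)) (padic_abs p (v k)))).
  - intros k. apply padic_abs_ultra; auto.
  - apply padic_abs_cv_qp_abs, padic_cauchy_add; auto.
  - apply cv_Rmax; apply padic_abs_cv_qp_abs; auto.
Qed.

Lemma padic_abs_evalQ_le P x C : 1 <= C -> padic_abs p x <= C ->
  padic_abs p (evalQ P x) <= C ^ length P.
Proof.
  induction P as [|c P IH]; intros HC Hx; simpl.
  - rewrite padic_abs_0 by reflexivity. lra.
  - eapply Rle_trans; [apply padic_abs_ultra; auto|]. rewrite padic_abs_mul by auto.
    specialize (IH HC Hx). pose proof (padic_abs_Z_le1 p Hp c).
    pose proof (padic_abs_ge0 p Hp x). pose proof (padic_abs_ge0 p Hp (evalQ P x)).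
    assert (1 <= C ^ length P) by (apply pow_R1_Rle; lra).
    apply Rmax_lub; [nra|]. apply Rmult_le_compat; lra.
Qed.

(* Integer coefficients have absolute value at most 1. *)
Lemma padic_abs_evalQ_lipschitz P x c C : 1 <= C -> padic_abs p x <= C -> padic_abs p c <= C ->
  padic_abs p (evalQ P x - evalQ P c) <= C ^ length P * padic_abs p (x - c).
Proof.
  induction P as [|a P IH]; intros HC Hx Hc; simpl.
  - rewrite padic_abs_0 by ring. pose proof (padic_abs_ge0 p Hp (x - c)). nra.
  - rewrite (padic_abs_Qeq p Hp _ ((x - c) * evalQ P x + c * (evalQ P x - evalQ P c))%Q) by ring.
    eapply Rle_trans; [apply padic_abs_ultra; auto|]. rewrite !padic_abs_mul by auto.
    specialize (IH HC Hx Hc). pose proof (padic_abs_evalQ_le P x C HC Hx).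
    pose proof (padic_abs_ge0 p Hp (x - c)).
    pose proof (padic_abs_ge0 p Hp (evalQ P x)).
    pose proof (padic_abs_ge0 p Hp (evalQ P x - evalQ P c)).
    assert (1 <= C ^ length P) by (apply pow_R1_Rle; lra).
    apply Rmax_lub.
    + rewrite Rmult_comm. apply Rmult_le_compat_r; nra.
    + apply Rle_trans with (C * (C ^ length P * padic_abs p (x - c))); [|right; ring].
      apply Rmult_le_compat; try lra. apply padic_abs_ge0; auto.
Qed.

End PadicCompletion.

Lemma rpow_0 w : rpow 0 w = 0.
Proof. unfold rpow. destruct (Req_EM_T 0 0); [auto|congruence]. Qed.

Lemma rpow_Rpower x w : 0 < x -> rpow x w = Rpower x w.
Proof. intros. unfold rpow. destruct (Req_EM_T x 0); [lra|auto]. Qed.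

Lemma rpow_ge0 x w : 0 <= rpow x w.
Proof. unfold rpow. destruct (Req_EM_T x 0); [lra|]. left. apply exp_pos. Qed.

Lemma rpow_1 w : rpow 1 w = 1.
Proof. rewrite rpow_Rpower by lra. unfold Rpower. rewrite ln_1, Rmult_0_r. apply exp_0. Qed.

Lemma rpow_mult x y w : 0 <= x -> 0 <= y -> rpow (x * y) w = rpow x w * rpow y w.
Proof.
  intros [Hx|<-] [Hy|<-]; rewrite ?Rmult_0_r, ?Rmult_0_l, ?rpow_0; try ring.
  rewrite !rpow_Rpower by (try apply Rmult_lt_0_compat; auto). symmetry. apply Rpower_mult_distr; auto.
Qed.

Lemma rpow_pow x w L : 0 <= x -> rpow (x ^ L) w = (rpow x w) ^ L.
Proof.
  intros Hx. induction L as [|L IH]; simpl; [apply rpow_1|].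
  rewrite rpow_mult, IH; auto. apply pow_le; auto.
Qed.

Lemma rpow_le x y w : 0 <= w -> 0 <= x <= y -> rpow x w <= rpow y w.
Proof.
  intros Hw [[Hx|<-] Hxy]; [|rewrite rpow_0; apply rpow_ge0].
  rewrite !rpow_Rpower by lra. apply Rle_Rpower_l; lra.
Qed.

Lemma rpow_lt x y w : 0 < w -> 0 <= x < y -> rpow x w < rpow y w.
Proof.
  intros Hw [[Hx|<-] Hxy].
  - rewrite !rpow_Rpower by lra. apply Rlt_Rpower_l; lra.
  - rewrite rpow_0, rpow_Rpower by lra. apply exp_pos.
Qed.

Lemma rpow_lt_inv x y w : 0 < w -> 0 <= y -> rpow x w < rpow y w -> x < y.
Proof.
  intros Hw Hy H. destruct (Rlt_le_dec x y) as [|Hyx]; auto.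
  pose proof (rpow_le y x w ltac:(lra) ltac:(lra)). lra.
Qed.

Lemma rpow_inv x w : 0 < x -> rpow (/ x) w = / rpow x w.
Proof.
  intros Hx. rewrite !rpow_Rpower by (auto; apply Rinv_0_lt_compat; auto).
  unfold Rpower. rewrite ln_Rinv, <- exp_Ropp by auto. f_equal. ring.
Qed.

Lemma rpow_gt1 x w : 1 < x -> 0 < w -> 1 < rpow x w.
Proof. intros. rewrite <- (rpow_1 w). apply rpow_lt; lra. Qed.

Lemma rpow_ge_self x v : 0 < x < 1 -> 0 < v <= 1 -> x <= rpow x v.
Proof.
  intros Hx Hv. rewrite rpow_Rpower by lra.
  replace v with (1 + (v - 1)) by ring. rewrite Rpower_plus, Rpower_1 by lra.
  assert (1 <= Rpower x (v - 1)).
  { replace (Rpower x (v - 1)) with (Rpower (/ x) (1 - v))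
      by (unfold Rpower; rewrite ln_Rinv by lra; f_equal; ring).
    rewrite <- (Rpower_O (/ x)) at 1 by (apply Rinv_0_lt_compat; lra).
    apply Rle_Rpower; [|lra]. rewrite <- Rinv_1. apply Rinv_le_contravar; lra. }
  nra.
Qed.

Lemma Rpower_cv1 c v : 0 < c -> Un_cv v 0 -> Un_cv (fun i => Rpower c (v i)) 1.
Proof.
  intros Hc Hv. rewrite <- exp_0. unfold Rpower.
  apply (continuity_seq exp (fun i => v i * ln c)).
  - apply derivable_continuous_pt, derivable_pt_exp.
  - replace 0 with (0 * ln c) by ring. apply CV_mult; auto using cv_const.
Qed.

Lemma rpow_cv1 c v : 0 < c -> Un_cv v 0 -> Un_cv (fun i => rpow c (v i)) 1.
Proof.
  intros Hc Hv. apply (cv_ext (fun i => Rpower c (v i))); [intros; rewrite rpow_Rpower; auto|].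
  apply Rpower_cv1; auto.
Qed.

Lemma rpow_cv1_inv c v : 1 < c -> Un_cv (fun i => rpow c (v i)) 1 -> Un_cv v 0.
Proof.
  intros Hc H eps He.
  assert (Hlo : rpow c (- eps) < 1)
    by (rewrite rpow_Rpower, <- (Rpower_O c) by lra; apply Rpower_lt; lra).
  assert (Hhi : 1 < rpow c eps) by (apply rpow_gt1; lra).
  destruct (eventually_and _ _ (cv_eventually_gt _ _ _ H Hlo) (cv_eventually_lt _ _ _ H Hhi)) as [K HK].
  exists K. intros k Hk. destruct (HK k Hk) as [H1 H2].
  rewrite !rpow_Rpower in H1, H2 by lra.
  unfold R_dist. rewrite Rminus_0_r. apply Rabs_def1.
  - destruct (Rlt_le_dec (v k) eps) as [|Hge]; auto.
    pose proof (Rle_Rpower c eps (v k) ltac:(lra) Hge). lra.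
  - destruct (Rlt_le_dec (- eps) (v k)) as [|Hle]; auto.
    pose proof (Rle_Rpower c (v k) (- eps) ltac:(lra) Hle). lra.
Qed.

Lemma rpow_inv_cv0_iff c w : 1 < c -> (forall i, 0 < w i) ->
  (Un_cv (fun i => rpow (/ c) (w i)) 0 <-> cv_infty w).
Proof.
  intros Hc Hw.
  assert (E : forall a, rpow (/ c) a = Rpower c (- a)).
  { intros. rewrite rpow_Rpower by (apply Rinv_0_lt_compat; lra).
    unfold Rpower. rewrite ln_Rinv by lra. f_equal. ring. }
  assert (lnc : 0 < ln c) by (rewrite <- ln_1; apply ln_increasing; lra).
  split.
  - intros H M. destruct (H _ (exp_pos (- M * ln c))) as [N HN]. exists N. intros i Hi.
    specialize (HN i Hi). unfold R_dist in HN.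
    rewrite Rminus_0_r, Rabs_right, E in HN by (apply Rle_ge, rpow_ge0).
    destruct (Rlt_le_dec M (w i)) as [|Hle]; auto.
    pose proof (Rle_Rpower c (- M) (- w i) ltac:(lra) ltac:(lra)). unfold Rpower in *. lra.
  - intros H eps He. destruct (H (- ln eps / ln c)) as [N HN]. exists N. intros i Hi.
    specialize (HN i Hi). unfold R_dist. rewrite Rminus_0_r, Rabs_right, E by (apply Rle_ge, rpow_ge0).
    replace eps with (Rpower c (- (- ln eps / ln c)))
      by (unfold Rpower; replace (- (- ln eps / ln c) * ln c) with (ln eps) by (field; lra);
          apply exp_ln; auto).
    apply Rpower_lt; lra.
Qed.

(** * Polynomials and the points of A^min *)

Lemma evalQ_Qeq P x y : (x == y)%Q -> (evalQ P x == evalQ P y)%Q.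
Proof. intros E. induction P as [|c P IH]; simpl; [reflexivity|]. rewrite IH, E. reflexivity. Qed.

Lemma evalQ_inject_Z P k : (evalQ P (inject_Z k) == inject_Z (evalZ P k))%Q.
Proof.
  induction P as [|c P IH]; simpl; [reflexivity|].
  rewrite IH, inject_Z_plus, inject_Z_mult. reflexivity.
Qed.

Lemma Q2R_inject_Z z : Q2R (inject_Z z) = IZR z.
Proof. unfold Q2R. simpl. field. Qed.

Lemma Q2R_evalQ P r : Q2R (evalQ P r) = evalR P (Q2R r).
Proof.
  induction P as [|c P IH]; simpl; [apply RMicromega.Q2R_0|].
  rewrite Q2R_plus, Q2R_mult, IH, Q2R_inject_Z. reflexivity.
Qed.

Lemma evalZ_congr P a b p : (p | a - b)%Z -> (p | evalZ P a - evalZ P b)%Z.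
Proof.
  intros H. induction P as [|c P IH]; simpl; [exists 0%Z; ring|].
  replace (c + a * evalZ P a - (c + b * evalZ P b))%Z
    with ((a - b) * evalZ P a + b * (evalZ P a - evalZ P b))%Z by ring.
  apply Z.divide_add_r; [apply Z.divide_mul_l|apply Z.divide_mul_r]; auto.
Qed.

Lemma prime_not_divide_pow p n L : prime p -> ~ (p | n)%Z -> ~ (p | n ^ Z.of_nat L)%Z.
Proof.
  intros Hp Hn. induction L as [|L IH].
  - simpl. intro H. apply Z.divide_1_r_abs in H. pose proof (prime_ge_2 p Hp). lia.
  - rewrite Nat2Z.inj_succ, Z.pow_succ_r by lia. intro H. apply prime_mult in H; tauto.
Qed.

(* [homog m n P = n^(length P) * P(m/n)], an integer. *)
Fixpoint homog (m n : Z) (P : poly) : Z :=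
  match P with
  | nil => 0%Z
  | c :: P' => (c * n ^ Z.of_nat (length (c :: P')) + m * homog m n P')%Z
  end.

Lemma inject_Z_homog m n P : n <> 0%Z ->
  (inject_Z (homog m n P) == inject_Z (n ^ Z.of_nat (length P)) * evalQ P (inject_Z m / inject_Z n))%Q.
Proof.
  intros Hn. induction P as [|c P IH]; cbn [homog evalQ]; [reflexivity|].
  replace (Z.of_nat (length (c :: P))) with (Z.succ (Z.of_nat (length P))) by (simpl length; lia).
  rewrite inject_Z_plus, !inject_Z_mult, IH, Z.pow_succ_r, inject_Z_mult by lia.
  field. rewrite inject_Z_eq0. exact Hn.
Qed.

Lemma homog_congr m n k p P : (p | n * k - m)%Z ->
  (p | n ^ Z.of_nat (length P) * evalZ P k - homog m n P)%Z.
Proof.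
  intros H. induction P as [|c P IH]; cbn [homog evalZ]; [exists 0%Z; simpl; ring|].
  replace (Z.of_nat (length (c :: P))) with (Z.succ (Z.of_nat (length P))) by (simpl length; lia).
  rewrite Z.pow_succ_r by lia.
  replace (n * n ^ Z.of_nat (length P) * (c + k * evalZ P k) -
           (c * (n * n ^ Z.of_nat (length P)) + m * homog m n P))%Z
    with (n ^ Z.of_nat (length P) * evalZ P k * (n * k - m)
          + m * (n ^ Z.of_nat (length P) * evalZ P k - homog m n P))%Z by ring.
  apply Z.divide_add_r; apply Z.divide_mul_r; auto.
Qed.

Lemma homog_eq0_iff m (n : nat) P : (0 < n)%nat ->
  homog m (Z.of_nat n) P = 0%Z <-> (evalQ P (frac_Q m n) == 0)%Q.
Proof.
  intros Hn. rewrite <- inject_Z_eq0, inject_Z_homog by lia. unfold frac_Q. split.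
  - intros E. apply Qmult_integral in E as [E|E]; auto.
    rewrite inject_Z_eq0 in E. exfalso. revert E. apply Z.pow_nonzero; lia.
  - intros ->. ring.
Qed.

Lemma frac_Q_spec m (n : nat) : (0 < n)%nat -> (inject_Z m == inject_Z (Z.of_nat n) * frac_Q m n)%Q.
Proof. intros. unfold frac_Q. field. rewrite inject_Z_eq0. lia. Qed.

Definition root_poly (m : Z) (n : nat) : poly := (- m)%Z :: Z.of_nat n :: nil.

Lemma evalQ_root_poly m (n : nat) x : (0 < n)%nat ->
  (evalQ (root_poly m n) x == inject_Z (Z.of_nat n) * (x - frac_Q m n))%Q.
Proof. intros. simpl. unfold frac_Q. rewrite inject_Z_opp. field. rewrite inject_Z_eq0. lia. Qed.

Lemma evalZ_root_poly m (n : nat) k : evalZ (root_poly m n) k = (Z.of_nat n * k - m)%Z.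
Proof. simpl. ring. Qed.

Lemma evalR_root_poly m (n : nat) t : (0 < n)%nat ->
  evalR (root_poly m n) t = IZR (Z.of_nat n) * (t - Q2R (frac_Q m n)).
Proof.
  intros Hn.
  assert (Hm : IZR m = IZR (Z.of_nat n) * Q2R (frac_Q m n)).
  { rewrite <- !Q2R_inject_Z, <- Q2R_mult. apply Qeq_eqR, frac_Q_spec; auto. }
  simpl. rewrite opp_IZR, Hm. ring.
Qed.

Lemma mu_Q0_01 r P : mu_Q0 r P = 0 \/ mu_Q0 r P = 1.
Proof. unfold mu_Q0. destruct (Qeq_bool _ _); auto. Qed.

Lemma mu_Q0_eq0_iff r P : mu_Q0 r P = 0 <-> (evalQ P r == 0)%Q.
Proof.
  unfold mu_Q0. rewrite <- Qeq_bool_iff. destruct (Qeq_bool _ _); split; auto; lra.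
Qed.

Lemma mu_Q0_eq1_iff r P : mu_Q0 r P = 1 <-> ~ (evalQ P r == 0)%Q.
Proof.
  rewrite <- mu_Q0_eq0_iff. destruct (mu_Q0_01 r P) as [E|E]; rewrite E; split; intros; lra.
Qed.

Lemma mu_Q0_Qeq r r' P : (r == r')%Q -> mu_Q0 r P = mu_Q0 r' P.
Proof. intros E. unfold mu_Q0. rewrite (evalQ_Qeq P r r' E). reflexivity. Qed.

Lemma mu_Q0_const r c : c <> 0%Z -> mu_Q0 r (c :: nil) = 1.
Proof.
  intros Hc. apply mu_Q0_eq1_iff. simpl. rewrite Qmult_0_r, Qplus_0_r, inject_Z_eq0. exact Hc.
Qed.

Lemma mu_Fp_01 p k P : mu_Fp p k P = 0 \/ mu_Fp p k P = 1.
Proof. unfold mu_Fp. destruct (_ =? _)%Z; auto. Qed.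

Lemma mu_Fp_eq0_iff p k P : p <> 0%Z -> mu_Fp p k P = 0 <-> (p | evalZ P k)%Z.
Proof.
  intros Hp. unfold mu_Fp. rewrite <- Z.mod_divide by exact Hp.
  destruct (Z.eqb_spec (evalZ P k mod p) 0); split; intro; auto; try lra; contradiction.
Qed.

Lemma mu_Fp_eq1_iff p k P : p <> 0%Z -> mu_Fp p k P = 1 <-> ~ (p | evalZ P k)%Z.
Proof.
  intros Hp. rewrite <- mu_Fp_eq0_iff by exact Hp.
  destruct (mu_Fp_01 p k P) as [E|E]; rewrite E; split; intros; lra.
Qed.

Lemma mu_Fp_congr p k k' P : p <> 0%Z -> (p | k' - k)%Z -> mu_Fp p k' P = mu_Fp p k P.
Proof.
  intros Hp Hk. pose proof (evalZ_congr P k' k p Hk) as D.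
  destruct (mu_Fp_01 p k P) as [E|E]; rewrite E.
  - apply mu_Fp_eq0_iff in E; auto. apply mu_Fp_eq0_iff; auto.
    replace (evalZ P k') with ((evalZ P k' - evalZ P k) + evalZ P k)%Z by ring.
    apply Z.divide_add_r; auto.
  - apply mu_Fp_eq1_iff in E; auto. apply mu_Fp_eq1_iff; auto. intro H. apply E.
    replace (evalZ P k) with (evalZ P k' - (evalZ P k' - evalZ P k))%Z by ring.
    apply Z.divide_sub_r; auto.
Qed.

Lemma evalZ_const c k : evalZ (c :: nil) k = c.
Proof. simpl. ring. Qed.

Lemma mu_R_const v t c : mu_R v t (c :: nil) = rpow (Rabs (IZR c)) v.
Proof. unfold mu_R. simpl. rewrite Rmult_0_r, Rplus_0_r. reflexivity. Qed.

Lemma mu_Qp_const p w u c : prime p -> mu_Qp p w u (c :: nil) = rpow (padic_abs p (inject_Z c)) w.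
Proof.
  intros Hp. unfold mu_Qp. f_equal.
  rewrite (qp_abs_ext p Hp _ (fun _ => inject_Z c)) by (intros; simpl; ring).
  apply qp_abs_const.
Qed.

(** * Discreteness and openness *)

Lemma discrete_Q0_pts : discrete_subspace Q0_pts.
Proof.
  intros f [r Hr]. set (P := ((- Qnum r)%Z :: Zpos (Qden r) :: nil)).
  assert (HPr : (evalQ P r == 0)%Q).
  { destruct r as [a b]. unfold P. cbn [evalQ Qnum Qden]. rewrite Qmake_Qdiv, inject_Z_opp.
    field. rewrite inject_Z_eq0. lia. }
  exists (P :: nil), 1. split; [lra|]. intros g [r' Hr'] H. specialize (H P (or_introl eq_refl)).
  rewrite Hr, Hr', (proj2 (mu_Q0_eq0_iff r P) HPr), Rminus_0_r in H.
  assert (HPr' : (evalQ P r' == 0)%Q).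
  { apply mu_Q0_eq0_iff. destruct (mu_Q0_01 r' P) as [E|E]; auto. rewrite E, Rabs_R1 in H. lra. }
  assert (Er : (r' == r)%Q).
  { destruct r as [a b]. unfold P in HPr'. cbn [evalQ Qnum Qden] in HPr'.
    assert (Hb : ~ (inject_Z (Zpos b) == 0)%Q) by (rewrite inject_Z_eq0; lia).
    rewrite inject_Z_opp in HPr'. rewrite Qmake_Qdiv.
    transitivity ((- inject_Z a + r' * (inject_Z (Zpos b) + r' * 0) + inject_Z a) / inject_Z (Zpos b))%Q.
    - field. exact Hb.
    - rewrite HPr'. field. exact Hb. }
  intro Q. rewrite Hr, Hr'. apply mu_Q0_Qeq. exact Er.
Qed.

Lemma mu_Fp_eq0_of_lt1 p k P : p <> 0%Z -> Rabs (mu_Fp p k P - 0) < 1 -> (p | evalZ P k)%Z.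
Proof.
  intros Hp H. apply mu_Fp_eq0_iff; auto.
  destruct (mu_Fp_01 p k P) as [E|E]; auto. rewrite E, Rminus_0_r, Rabs_R1 in H. lra.
Qed.

Lemma discrete_Fp_pts : discrete_subspace (fun f => exists p, prime p /\ Fp_pts p f).
Proof.
  intros f [p [Hp [k Hk]]]. pose proof (prime_ge_2 p Hp) as Hp2.
  set (P := (- k :: 1 :: nil)%Z).
  exists ((p :: nil) :: P :: nil), 1. split; [lra|].
  intros g [p' [Hp' [k' Hk']]] H. pose proof (prime_ge_2 p' Hp') as Hp2'.
  assert (Hval : forall Q, In Q ((p :: nil) :: P :: nil) -> (p | evalZ Q k)%Z -> (p' | evalZ Q k')%Z).
  { intros Q HQ D. specialize (H Q HQ). rewrite Hk, Hk', (proj2 (mu_Fp_eq0_iff p k Q ltac:(lia)) D) in H.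
    apply mu_Fp_eq0_of_lt1 in H; [auto|lia]. }
  pose proof (Hval _ (or_introl eq_refl) ltac:(rewrite evalZ_const; apply Z.divide_refl)) as Hpp'.
  rewrite evalZ_const in Hpp'. apply prime_div_prime in Hpp'; auto. subst p'.
  pose proof (Hval P (or_intror (or_introl eq_refl))
                ltac:(exists 0%Z; unfold P; cbn [evalZ]; ring)) as Hkk'.
  replace (evalZ P k') with (k' - k)%Z in Hkk' by (unfold P; cbn [evalZ]; ring).
  intro Q. rewrite Hk, Hk'. apply mu_Fp_congr; auto. lia.
Qed.

Lemma U_Qp_value_at_prime q f : prime q -> U_Qp q f -> 0 < f (q :: nil) < 1.
Proof.
  intros Hq [w [u [Hw [Hu Hf]]]]. pose proof (prime_ge_2 q Hq).
  assert (Q1 : 1 < IZR q) by (apply IZR_lt; lia).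
  rewrite Hf, mu_Qp_const, padic_abs_p, rpow_inv by (auto; lra).
  pose proof (rpow_gt1 (IZR q) w Q1 Hw).
  split; [apply Rinv_0_lt_compat; lra|]. rewrite <- Rinv_1. apply Rinv_lt_contravar; lra.
Qed.

Lemma mu_Qp_const_prime_lt1 p q w u : prime p -> prime q ->
  mu_Qp p w u (q :: nil) < 1 -> p = q.
Proof.
  intros Hp Hq Hlt. destruct (Z.eq_dec p q) as [|Hpq]; auto. exfalso.
  rewrite mu_Qp_const, padic_abs_Z_coprime, rpow_1 in Hlt; auto; [lra|].
  intro E. apply Hpq, prime_div_prime; auto.
Qed.

Lemma Amin_lt1_at_prime q g : prime q -> Amin g -> g (q :: nil) < 1 ->
  (Fp_pts q g /\ g (q :: nil) = 0) \/ U_Qp q g.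
Proof.
  intros Hq HA Hlt. pose proof (prime_ge_2 q Hq).
  destruct HA as [[r Hr]|[[p [Hp [k Hk]]]|[[v [t [Hv Ht]]]|[p [Hp [w [u [Hw [Hu Hg]]]]]]]]].
  - rewrite Hr, mu_Q0_const in Hlt by lia. lra.
  - pose proof (prime_ge_2 p Hp). rewrite Hk in Hlt |- *.
    destruct (mu_Fp_01 p k (q :: nil)) as [E|E]; rewrite E in Hlt |- *; [|lra].
    apply mu_Fp_eq0_iff in E; [|lia]. rewrite evalZ_const in E.
    apply prime_div_prime in E; auto. subst p. left. split; [exists k|]; auto.
  - rewrite Ht, mu_R_const, Rabs_right in Hlt by (apply Rle_ge, IZR_le; lia).
    pose proof (rpow_gt1 (IZR q) v ltac:(apply IZR_lt; lia) ltac:(lra)). lra.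
  - rewrite Hg in Hlt. apply mu_Qp_const_prime_lt1 in Hlt; auto. subst p.
    right. exists w, u. auto.
Qed.

Lemma Amin_gt1_at_2 g : Amin g -> 1 < g (2%Z :: nil) -> U_R g.
Proof.
  intros HA Hlt.
  destruct HA as [[r Hr]|[[p [Hp [k Hk]]]|[H|[p [Hp [w [u [Hw [Hu Hg]]]]]]]]]; auto; exfalso.
  - rewrite Hr, mu_Q0_const in Hlt by lia. lra.
  - rewrite Hk in Hlt. destruct (mu_Fp_01 p k (2%Z :: nil)) as [E|E]; rewrite E in Hlt; lra.
  - rewrite Hg, mu_Qp_const in Hlt by auto.
    pose proof (rpow_le _ _ w ltac:(lra) (conj (padic_abs_ge0 p Hp _) (padic_abs_Z_le1 p Hp 2))).
    rewrite rpow_1 in H. lra.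
Qed.

Lemma open_U_R : open_in_Amin U_R.
Proof.
  intros f [v [t [Hv Ht]]]. pose proof (rpow_gt1 2 v ltac:(lra) ltac:(lra)).
  exists ((2%Z :: nil) :: nil), (rpow 2 v - 1). split; [lra|].
  intros g HA H1. apply Amin_gt1_at_2; auto. specialize (H1 _ (or_introl eq_refl)).
  rewrite Ht, mu_R_const, (Rabs_right 2) in H1 by lra. apply Rabs_def2 in H1. lra.
Qed.

Lemma open_U_Qp q : prime q -> open_in_Amin (U_Qp q).
Proof.
  intros Hq f Hf. pose proof (U_Qp_value_at_prime q f Hq Hf) as [H0 H1].
  exists ((q :: nil) :: nil), (Rmin (f (q :: nil)) (1 - f (q :: nil))).
  split; [apply Rmin_pos; lra|]. intros g HA H. specialize (H _ (or_introl eq_refl)).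
  apply Rabs_def2 in H. pose proof (Rmin_l (f (q :: nil)) (1 - f (q :: nil))).
  pose proof (Rmin_r (f (q :: nil)) (1 - f (q :: nil))).
  destruct (Amin_lt1_at_prime q g Hq HA ltac:(lra)) as [[_ E]|E]; auto. lra.
Qed.

Lemma open_Fp_or_U_Qp q : prime q -> open_in_Amin (fun f => Fp_pts q f \/ U_Qp q f).
Proof.
  intros Hq f Hf. pose proof (prime_ge_2 q Hq) as Hq2.
  assert (V : 0 <= f (q :: nil) < 1).
  { destruct Hf as [[k Hk]|Hf]; [|pose proof (U_Qp_value_at_prime q f Hq Hf); lra].
    rewrite Hk, (proj2 (mu_Fp_eq0_iff q k (q :: nil) ltac:(lia))); [lra|].
    rewrite evalZ_const. apply Z.divide_refl. }
  exists ((q :: nil) :: nil), (1 - f (q :: nil)). split; [lra|].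
  intros g HA H. specialize (H _ (or_introl eq_refl)). apply Rabs_def2 in H.
  destruct (Amin_lt1_at_prime q g Hq HA ltac:(lra)) as [[E _]|E]; auto.
Qed.

(** * Convergence *)

Section NearInteger.
Variables (q c : Z) (s : nat -> Q).
Hypotheses (Hq : prime q) (Hs : padic_cauchy q s).

Let Hq_gt1 : 1 < IZR q.
Proof. apply IZR_lt. pose proof (prime_ge_2 q Hq). lia. Qed.

Let Hsc : padic_cauchy q (fun k => s k - inject_Z c)%Q.
Proof. apply padic_cauchy_sub_const; auto. Qed.

Lemma in_n_plus_qZq_iff : in_n_plus_qZq q c s <-> qp_abs q (fun k => s k - inject_Z c)%Q < 1.
Proof.
  pose proof (prime_ge_2 q Hq) as Hq2. split.
  - intros [z [Hz [Hz1 He]]].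
    assert (Hcz : padic_cauchy q (fun k => inject_Z q * z k)%Q)
      by (apply padic_cauchy_mul; auto using padic_cauchy_const).
    rewrite (qp_abs_ext q Hq _ (fun k => inject_Z q * z k + (s k - (inject_Z c + inject_Z q * z k)))%Q)
      by (intros; ring).
    eapply Rle_lt_trans; [apply qp_abs_ultra; auto|].
    + apply padic_cauchy_sub; auto. apply (padic_cauchy_add q Hq (fun _ => inject_Z c)); auto.
      apply padic_cauchy_const.
    + rewrite He, qp_abs_scale, padic_abs_p by auto. pose proof (qp_abs_ge0 q Hq z Hz).
      assert (/ IZR q < 1) by (rewrite <- Rinv_1; apply Rinv_lt_contravar; lra).
      apply Rmax_lub_lt; [|lra]. assert (0 < / IZR q) by (apply Rinv_0_lt_compat; lra). nra.
  - intros Hlt. set (z := fun k => ((s k - inject_Z c) * / inject_Z q)%Q).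
    assert (Hz : padic_cauchy q z) by (apply padic_cauchy_mul; auto using padic_cauchy_const).
    assert (Hle : qp_abs q (fun k => s k - inject_Z c)%Q <= / IZR q).
    { apply qp_abs_le; auto. apply (eventually_mono _ _ (fun k => padic_abs_lt1 q Hq _)).
      apply qp_abs_lt_eventually; auto. }
    exists z. split; [auto|split].
    + unfold z. rewrite qp_abs_mul, qp_abs_const, padic_abs_inv_p by auto using padic_cauchy_const.
      apply Rle_trans with (/ IZR q * IZR q); [apply Rmult_le_compat_r; lra|right; field; lra].
    + rewrite (qp_abs_ext q Hq _ (fun _ => 0%Q)), qp_abs_const, padic_abs_0; [reflexivity..|].
      intros. unfold z. field. rewrite inject_Z_eq0. lia.
Qed.

Let Hinvq_lt1 : / IZR q < 1.
Proof. rewrite <- Rinv_1. apply Rinv_lt_contravar; lra. Qed.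

Lemma evalQ_near_integer P : qp_abs q (fun k => s k - inject_Z c)%Q < 1 ->
  eventually (fun k => padic_abs q (evalQ P (s k) - inject_Z (evalZ P c)) <= / IZR q).
Proof.
  intros Hlt. apply (eventually_mono (fun k => padic_abs q (s k - inject_Z c) < 1));
    [|apply qp_abs_lt_eventually; auto].
  intros k Hk. apply padic_abs_lt1 in Hk; auto.
  rewrite (padic_abs_Qeq q Hq _ (evalQ P (s k) - evalQ P (inject_Z c)))
    by (rewrite evalQ_inject_Z; reflexivity).
  eapply Rle_trans; [apply (padic_abs_evalQ_lipschitz q Hq P (s k) (inject_Z c) 1)|]; try lra.
  - apply (padic_abs_le1_of_sub q Hq _ (inject_Z c)); [apply padic_abs_Z_le1; auto|lra].
  - apply padic_abs_Z_le1; auto.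
  - rewrite pow1. lra.
Qed.

Lemma qp_abs_evalQ_divide P : qp_abs q (fun k => s k - inject_Z c)%Q < 1 ->
  (q | evalZ P c)%Z -> qp_abs q (fun k => evalQ P (s k)) <= / IZR q.
Proof.
  intros Hlt D. apply (qp_abs_le q Hq); [apply (padic_cauchy_evalQ q Hq P s Hs)|].
  refine (eventually_mono _ _ _ (evalQ_near_integer P Hlt)). intros k Hk.
  rewrite (padic_abs_Qeq q Hq _ ((evalQ P (s k) - inject_Z (evalZ P c)) + inject_Z (evalZ P c))) by ring.
  eapply Rle_trans; [apply padic_abs_ultra; auto|]. apply Rmax_lub; auto.
  apply padic_abs_Z_divide; auto.
Qed.

Lemma qp_abs_evalQ_coprime P : qp_abs q (fun k => s k - inject_Z c)%Q < 1 ->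
  ~ (q | evalZ P c)%Z -> qp_abs q (fun k => evalQ P (s k)) = 1.
Proof.
  intros Hlt D. apply qp_abs_eventually_const.
  refine (eventually_mono _ _ _ (evalQ_near_integer P Hlt)). intros k Hk.
  rewrite (padic_abs_Qeq q Hq _ (inject_Z (evalZ P c) + (evalQ P (s k) - inject_Z (evalZ P c)))) by ring.
  rewrite padic_abs_dominant, padic_abs_Z_coprime; auto. rewrite padic_abs_Z_coprime; auto. lra.
Qed.

End NearInteger.

Section ConvergenceToFq.
Variables (q c : Z) (p : nat -> Z) (w : nat -> R) (s : nat -> nat -> Q).
Hypotheses (Hq : prime q) (Hp : forall i, prime (p i)) (Hw : forall i, 0 < w i)
  (Hs : forall i, padic_cauchy (p i) (s i)).

Let Hq_gt1 : 1 < IZR q.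
Proof. apply IZR_lt. pose proof (prime_ge_2 q Hq). lia. Qed.

Lemma mu_Qp_cv_mu_Fp_necessary :
  sn_conv (fun i => mu_Qp (p i) (w i) (s i)) (mu_Fp q c) ->
  cv_infty w /\ eventually (fun i => p i = q /\ in_n_plus_qZq q c (s i)).
Proof.
  intros H. pose proof (prime_ge_2 q Hq).
  assert (Hlt1 : forall P, (q | evalZ P c)%Z ->
            eventually (fun i => mu_Qp (p i) (w i) (s i) P < 1)).
  { intros P D. apply (cv_eventually_lt _ _ _ (H P)).
    rewrite (proj2 (mu_Fp_eq0_iff q c P ltac:(lia)) D). lra. }
  assert (Hpq : eventually (fun i => p i = q)).
  { refine (eventually_mono _ _ _ (Hlt1 (q :: nil) _)); [|rewrite evalZ_const; apply Z.divide_refl].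
    intros i. apply mu_Qp_const_prime_lt1; auto. }
  split.
  - apply (rpow_inv_cv0_iff (IZR q)); auto.
    apply (cv_eventually_ext (fun i => mu_Qp (p i) (w i) (s i) (q :: nil))).
    + refine (eventually_mono _ _ _ Hpq). intros i Hi.
      rewrite mu_Qp_const, Hi, padic_abs_p; auto.
    + rewrite <- (proj2 (mu_Fp_eq0_iff q c (q :: nil) ltac:(lia)))
        by (rewrite evalZ_const; apply Z.divide_refl).
      apply H.
  - refine (eventually_mono _ _ _ (eventually_and _ _ Hpq (Hlt1 (- c :: 1 :: nil)%Z _)));
      [|exists 0%Z; cbn [evalZ]; ring].
    intros i [Hi Hlt]. split; auto. pose proof (Hs i) as Hsi. rewrite Hi in Hlt, Hsi.
    apply in_n_plus_qZq_iff; auto. unfold mu_Qp in Hlt.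
    rewrite (qp_abs_ext q Hq _ (fun k => s i k - inject_Z c)%Q) in Hlt
      by (intros; simpl; rewrite inject_Z_opp; ring).
    rewrite <- (rpow_1 (w i)) in Hlt. apply rpow_lt_inv in Hlt; auto; lra.
Qed.

Lemma mu_Qp_cv_mu_Fp_sufficient :
  cv_infty w -> eventually (fun i => p i = q /\ in_n_plus_qZq q c (s i)) ->
  sn_conv (fun i => mu_Qp (p i) (w i) (s i)) (mu_Fp q c).
Proof.
  intros Hinf Hev P. pose proof (prime_ge_2 q Hq).
  assert (Hnear : eventually (fun i => p i = q /\ qp_abs q (fun k => s i k - inject_Z c)%Q < 1)).
  { refine (eventually_mono _ _ _ Hev). intros i [Hi Hin]. split; auto.
    pose proof (Hs i) as Hsi. rewrite Hi in Hsi. apply in_n_plus_qZq_iff; auto. }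
  destruct (Zdivide_dec q (evalZ P c)) as [D|D].
  - rewrite (proj2 (mu_Fp_eq0_iff q c P ltac:(lia)) D).
    apply (cv_squeeze0 _ (fun i => rpow (/ IZR q) (w i))); [|apply rpow_inv_cv0_iff; auto].
    refine (eventually_mono _ _ _ Hnear). intros i [Hi Hlt].
    pose proof (Hs i) as Hsi. rewrite Hi in Hsi. unfold mu_Qp. rewrite Hi.
    split; [apply rpow_ge0|]. apply rpow_le; [specialize (Hw i); lra|]. split.
    + apply qp_abs_ge0, padic_cauchy_evalQ; auto.
    + apply (qp_abs_evalQ_divide q c); auto.
  - rewrite (proj2 (mu_Fp_eq1_iff q c P ltac:(lia)) D). apply cv_eventually_const.
    refine (eventually_mono _ _ _ Hnear). intros i [Hi Hlt].
    pose proof (Hs i) as Hsi. rewrite Hi in Hsi. unfold mu_Qp. rewrite Hi.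
    rewrite (qp_abs_evalQ_coprime q c); auto. apply rpow_1.
Qed.

End ConvergenceToFq.

Lemma divide_fact N a : (1 <= a <= N)%nat -> (Z.of_nat a | Z.of_nat (fact N))%Z.
Proof.
  induction N as [|N IH]; intros Ha; [lia|].
  change (fact (S N)) with (S N * fact N)%nat. rewrite Nat2Z.inj_mul.
  destruct (Nat.eq_dec a (S N)) as [->|]; [apply Z.divide_factor_l|].
  apply Z.divide_mul_r, IH. lia.
Qed.

Lemma prime_gt_of_not_divide_fact p N : prime p -> ~ (p | Z.of_nat (fact N))%Z -> (Z.of_nat N < p)%Z.
Proof.
  intros Hp D. pose proof (prime_ge_2 p Hp). destruct (Z_lt_le_dec (Z.of_nat N) p) as [|Hle]; auto.
  exfalso. apply D. replace p with (Z.of_nat (Z.to_nat p)) by lia. apply divide_fact. lia.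
Qed.

Lemma cv_infty_of_eventually_gt (u : nat -> Z) :
  (forall N : nat, eventually (fun i => Z.of_nat N < u i)%Z) -> cv_infty (fun i => IZR (u i)).
Proof.
  intros H M. destruct (H (Z.to_nat (up M))) as [K HK]. exists K. intros i Hi.
  specialize (HK i Hi). destruct (archimed M) as [HM _].
  apply IZR_lt in HK. assert (IZR (up M) <= IZR (Z.of_nat (Z.to_nat (up M)))) by (apply IZR_le; lia).
  lra.
Qed.

Section ConvergenceToQ0FromFp.
Variables (m : Z) (n : nat) (p k : nat -> Z).
Hypotheses (Hn : (0 < n)%nat) (Hp : forall i, prime (p i)).

Let Hp0 i : p i <> 0%Z.
Proof. pose proof (prime_ge_2 _ (Hp i)). lia. Qed.

Lemma mu_Fp_cv_mu_Q0_eventually r :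
  sn_conv (fun i => mu_Fp (p i) (k i)) (mu_Q0 r) ->
  forall P, eventually (fun i => mu_Fp (p i) (k i) P = mu_Q0 r P).
Proof. intros H P. apply cv_01_eventually_const; auto using mu_Fp_01, mu_Q0_01. Qed.

Lemma mu_Fp_cv_mu_Q0_necessary :
  sn_conv (fun i => mu_Fp (p i) (k i)) (mu_Q0 (frac_Q m n)) ->
  cv_infty (fun i => IZR (p i)) /\
  eventually (fun i => ~ (p i | Z.of_nat n)%Z /\ (p i | Z.of_nat n * k i - m)%Z).
Proof.
  intros H. pose proof (mu_Fp_cv_mu_Q0_eventually _ H) as Hev.
  assert (Hunit : forall c, c <> 0%Z -> eventually (fun i => ~ (p i | c)%Z)).
  { intros c Hc. refine (eventually_mono _ _ _ (Hev (c :: nil))). intros i Hi.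
    rewrite mu_Q0_const, mu_Fp_eq1_iff, evalZ_const in Hi; auto. }
  split.
  - apply cv_infty_of_eventually_gt. intros N.
    refine (eventually_mono _ _ _ (Hunit (Z.of_nat (fact N)) _)).
    + intros i. apply prime_gt_of_not_divide_fact; auto.
    + pose proof (lt_O_fact N). lia.
  - refine (eventually_and _ _ (Hunit (Z.of_nat n) ltac:(lia)) _).
    refine (eventually_mono _ _ _ (Hev (root_poly m n))). intros i Hi.
    rewrite (proj2 (mu_Q0_eq0_iff _ _)) in Hi by (rewrite evalQ_root_poly by auto; ring).
    apply mu_Fp_eq0_iff in Hi; auto. rewrite evalZ_root_poly in Hi. exact Hi.
Qed.

Lemma divide_evalZ_iff_homog i P : ~ (p i | Z.of_nat n)%Z -> (p i | Z.of_nat n * k i - m)%Z ->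
  (p i | evalZ P (k i))%Z <-> (p i | homog m (Z.of_nat n) P)%Z.
Proof.
  intros Hpn Hpk. pose proof (homog_congr m (Z.of_nat n) (k i) (p i) P Hpk) as D. split.
  - intros HP. replace (homog m (Z.of_nat n) P)
      with (Z.of_nat n ^ Z.of_nat (length P) * evalZ P (k i)
            - (Z.of_nat n ^ Z.of_nat (length P) * evalZ P (k i) - homog m (Z.of_nat n) P))%Z by ring.
    apply Z.divide_sub_r; auto. apply Z.divide_mul_r; auto.
  - intros Hh. assert (Hpow : (p i | Z.of_nat n ^ Z.of_nat (length P) * evalZ P (k i))%Z).
    { replace (Z.of_nat n ^ Z.of_nat (length P) * evalZ P (k i))%Z
        with ((Z.of_nat n ^ Z.of_nat (length P) * evalZ P (k i) - homog m (Z.of_nat n) P)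
              + homog m (Z.of_nat n) P)%Z by ring.
      apply Z.divide_add_r; auto. }
    apply prime_mult in Hpow as [Hpow|]; auto.
    exfalso. apply (prime_not_divide_pow _ _ _ (Hp i) Hpn Hpow).
Qed.

Lemma mu_Fp_cv_mu_Q0_sufficient :
  cv_infty (fun i => IZR (p i)) ->
  eventually (fun i => ~ (p i | Z.of_nat n)%Z /\ (p i | Z.of_nat n * k i - m)%Z) ->
  sn_conv (fun i => mu_Fp (p i) (k i)) (mu_Q0 (frac_Q m n)).
Proof.
  intros Hinf Hev P. apply cv_eventually_const.
  set (h := homog m (Z.of_nat n) P).
  destruct (Z.eq_dec h 0) as [Hh|Hh].
  - rewrite (proj2 (mu_Q0_eq0_iff _ _)) by (apply homog_eq0_iff; auto).
    refine (eventually_mono _ _ _ Hev). intros i [Hpn Hpk].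
    apply mu_Fp_eq0_iff; auto. apply (divide_evalZ_iff_homog i P Hpn Hpk).
    fold h. rewrite Hh. apply Z.divide_0_r.
  - rewrite (proj2 (mu_Q0_eq1_iff _ _)) by (rewrite <- homog_eq0_iff; auto).
    destruct (Hinf (IZR (Z.abs h))) as [K HK].
    refine (eventually_mono _ _ _ (eventually_and _ _ Hev (ex_intro _ K HK))).
    intros i [[Hpn Hpk] Hbig]. apply lt_IZR in Hbig.
    apply mu_Fp_eq1_iff; auto. rewrite (divide_evalZ_iff_homog i P Hpn Hpk). fold h.
    intro D. apply Zdivide_bounds in D; auto. pose proof (prime_ge_2 _ (Hp i)). lia.
Qed.

End ConvergenceToQ0FromFp.

Lemma evalR_cv P t r : Un_cv t r -> Un_cv (fun i => evalR P (t i)) (evalR P r).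
Proof.
  intros H. induction P as [|c P IH]; simpl; [apply cv_const|].
  apply CV_plus; [apply cv_const|]. apply CV_mult; auto.
Qed.

Lemma evalR_locally_bounded P c : exists M, 0 <= M /\
  forall x, Rabs (x - c) <= 1 -> Rabs (evalR P x) <= M.
Proof.
  induction P as [|a P [M [HM HMb]]]; simpl.
  - exists 0. split; [lra|]. intros. rewrite Rabs_R0. lra.
  - exists (Rabs (IZR a) + (Rabs c + 1) * M).
    pose proof (Rabs_pos (IZR a)). pose proof (Rabs_pos c). split; [nra|].
    intros x Hx. eapply Rle_trans; [apply Rabs_triang|]. rewrite Rabs_mult.
    apply Rplus_le_compat_l, Rmult_le_compat; try apply Rabs_pos; auto.
    replace x with ((x - c) + c) by ring. eapply Rle_trans; [apply Rabs_triang|lra].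
Qed.

Lemma evalR_locally_lipschitz P c : exists L, 0 < L /\
  forall x, Rabs (x - c) <= 1 -> Rabs (evalR P x - evalR P c) <= L * Rabs (x - c).
Proof.
  induction P as [|a P [L [HL HLb]]]; simpl.
  - exists 1. split; [lra|]. intros. rewrite Rminus_0_r, Rabs_R0. pose proof (Rabs_pos (x - c)). lra.
  - destruct (evalR_locally_bounded P c) as [M [HM HMb]].
    exists (M + Rabs c * L + 1). pose proof (Rabs_pos c). split; [nra|].
    intros x Hx.
    replace (IZR a + x * evalR P x - (IZR a + c * evalR P c))
      with ((x - c) * evalR P x + c * (evalR P x - evalR P c)) by ring.
    eapply Rle_trans; [apply Rabs_triang|]. rewrite !Rabs_mult.
    specialize (HMb x Hx). specialize (HLb x Hx). pose proof (Rabs_pos (x - c)).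
    apply Rle_trans with (Rabs (x - c) * M + Rabs c * (L * Rabs (x - c))); [|nra].
    apply Rplus_le_compat; apply Rmult_le_compat_l; auto.
Qed.

Lemma mu_Q0_eq0_iff_evalR r P : mu_Q0 r P = 0 <-> evalR P (Q2R r) = 0.
Proof.
  rewrite mu_Q0_eq0_iff, <- Q2R_evalQ. split.
  - intros H. apply Qeq_eqR in H. rewrite H. apply RMicromega.Q2R_0.
  - intros H. apply eqR_Qeq. rewrite H. symmetry. apply RMicromega.Q2R_0.
Qed.

Lemma cv_of_rpow_dist_cv0 v t r : (forall i, 0 < v i <= 1) ->
  Un_cv (fun i => rpow (Rabs (t i - r)) (v i)) 0 -> Un_cv t r.
Proof.
  intros Hv Ht eps He.
  pose proof (Rmin_l eps (1 / 2)). pose proof (Rmin_r eps (1 / 2)).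
  set (e := Rmin eps (1 / 2)) in *.
  assert (He0 : 0 < e) by (apply Rmin_pos; lra).
  destruct (Ht e He0) as [N HN]. exists N. intros i Hi. specialize (HN i Hi).
  unfold R_dist in *. rewrite Rminus_0_r, Rabs_right in HN by (apply Rle_ge, rpow_ge0).
  destruct (Rlt_le_dec (Rabs (t i - r)) e) as [|Hge]; [lra|]. exfalso.
  pose proof (rpow_le e (Rabs (t i - r)) (v i) ltac:(specialize (Hv i); lra) ltac:(lra)).
  pose proof (rpow_ge_self e (v i) ltac:(lra) (Hv i)). lra.
Qed.

Section ConvergenceToQ0FromR.
Variables (m : Z) (n : nat) (v t : nat -> R).
Hypotheses (Hn : (0 < n)%nat) (Hv : forall i, 0 < v i <= 1).

Let r := Q2R (frac_Q m n).

Lemma mu_R_cv_mu_Q0_necessary :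
  sn_conv (fun i => mu_R (v i) (t i)) (mu_Q0 (frac_Q m n)) ->
  Un_cv v 0 /\ Un_cv (fun i => rpow (Rabs (t i - r)) (v i)) 0.
Proof.
  intros H. split.
  - apply (rpow_cv1_inv 2); [lra|].
    apply (cv_ext (fun i => mu_R (v i) (t i) (2%Z :: nil))).
    + intros. rewrite mu_R_const, Rabs_right by lra. reflexivity.
    + rewrite <- (mu_Q0_const (frac_Q m n) 2) by lia. apply H.
  - assert (HIZR : 1 <= IZR (Z.of_nat n)) by (apply IZR_le; lia).
    apply (cv_squeeze0 _ (fun i => mu_R (v i) (t i) (root_poly m n))).
    + exists O. intros i _. split; [apply rpow_ge0|]. unfold mu_R.
      apply rpow_le; [specialize (Hv i); lra|]. split; [apply Rabs_pos|].
      rewrite evalR_root_poly, Rabs_mult, (Rabs_right (IZR _)) by (auto; lra).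
      fold r. pose proof (Rabs_pos (t i - r)). nra.
    + assert (E : mu_Q0 (frac_Q m n) (root_poly m n) = 0)
        by (apply mu_Q0_eq0_iff; rewrite evalQ_root_poly by auto; ring).
      rewrite <- E. apply H.
Qed.

Lemma mu_R_cv_mu_Q0_sufficient :
  Un_cv v 0 -> Un_cv (fun i => rpow (Rabs (t i - r)) (v i)) 0 ->
  sn_conv (fun i => mu_R (v i) (t i)) (mu_Q0 (frac_Q m n)).
Proof.
  intros Hv0 Ht P. pose proof (cv_of_rpow_dist_cv0 v t r Hv Ht) as Htr.
  destruct (Req_dec (evalR P r) 0) as [E|E].
  - rewrite (proj2 (mu_Q0_eq0_iff_evalR _ _) E).
    destruct (evalR_locally_lipschitz P r) as [L [HL HLb]].
    apply (cv_squeeze0 _ (fun i => rpow L (v i) * rpow (Rabs (t i - r)) (v i))).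
    + destruct (Htr 1 ltac:(lra)) as [K HK]. exists K. intros i Hi. split; [apply rpow_ge0|].
      unfold mu_R. rewrite <- rpow_mult by (try lra; apply Rabs_pos).
      apply rpow_le; [specialize (Hv i); lra|]. split; [apply Rabs_pos|].
      rewrite <- (Rminus_0_r (evalR P (t i))), <- E. apply HLb. left. apply (HK i Hi).
    + replace 0 with (1 * 0) by ring. apply CV_mult; auto. apply rpow_cv1; auto.
  - rewrite (proj2 (mu_Q0_eq1_iff _ _)) by (rewrite <- mu_Q0_eq0_iff, mu_Q0_eq0_iff_evalR; auto).
    set (a := Rabs (evalR P r)). assert (Ha : 0 < a) by (apply Rabs_pos_lt; auto).
    pose proof (cv_cvabs _ _ (evalR_cv P t r Htr)) as Hc. fold a in Hc.
    apply (cv_squeeze (fun i => rpow (a / 2) (v i)) _ (fun i => rpow (2 * a) (v i))).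
    + refine (eventually_mono _ _ _ (eventually_and _ _ (cv_eventually_gt _ _ (a / 2) Hc ltac:(lra))
                                                       (cv_eventually_lt _ _ (2 * a) Hc ltac:(lra)))).
      intros i [H1 H2]. specialize (Hv i). unfold mu_R. split; apply rpow_le; lra.
    + apply rpow_cv1; auto. lra.
    + apply rpow_cv1; auto. lra.
Qed.

End ConvergenceToQ0FromR.

Lemma qp_abs_evalQ_sub_le p P u c : prime p -> padic_cauchy p u ->
  qp_abs p (fun k => u k - c)%Q < 1 ->
  qp_abs p (fun k => evalQ P (u k) - evalQ P c)%Q
    <= Rmax 1 (padic_abs p c) ^ length P * qp_abs p (fun k => u k - c)%Q.
Proof.
  intros Hp Hu Hlt. set (C := Rmax 1 (padic_abs p c)).
  assert (HC1 : 1 <= C) by apply Rmax_l. assert (HCc : padic_abs p c <= C) by apply Rmax_r.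
  assert (Huc : padic_cauchy p (fun k => u k - c)%Q) by (apply padic_cauchy_sub_const; auto).
  apply (cv_le_eventually (fun k => padic_abs p (evalQ P (u k) - evalQ P c))
                          (fun k => C ^ length P * padic_abs p (u k - c))).
  - refine (eventually_mono _ _ _ (qp_abs_lt_eventually p Hp _ _ Huc Hlt)). intros k Hk.
    apply padic_abs_evalQ_lipschitz; auto.
    rewrite (padic_abs_Qeq p Hp (u k) ((u k - c) + c)) by ring.
    eapply Rle_trans; [apply padic_abs_ultra; auto|]. apply Rmax_lub; lra.
  - apply padic_abs_cv_qp_abs; auto. apply padic_cauchy_sub_const, padic_cauchy_evalQ; auto.
  - apply CV_mult; [apply cv_const|]. apply padic_abs_cv_qp_abs; auto.
Qed.

Section ConvergenceToQ0FromQp.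
Variables (m : Z) (n : nat) (p : nat -> Z) (w : nat -> R) (s : nat -> nat -> Q).
Hypotheses (Hn : (0 < n)%nat) (Hp : forall i, prime (p i)) (Hw : forall i, 0 < w i)
  (Hs : forall i, padic_cauchy (p i) (s i)).

Let r := frac_Q m n.

Let Hsr i : padic_cauchy (p i) (fun j => s i j - r)%Q.
Proof. apply padic_cauchy_sub_const; auto. Qed.

Lemma mu_Qp_cv_mu_Q0_necessary :
  sn_conv (fun i => mu_Qp (p i) (w i) (s i)) (mu_Q0 r) ->
  (forall k : nat, (0 < k)%nat ->
     Un_cv (fun i => rpow (padic_abs (p i) (inject_Z (Z.of_nat k))) (w i)) 1) /\
  Un_cv (fun i => rpow (qp_abs (p i) (fun j => s i j - r)%Q) (w i)) 0.
Proof.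
  intros H.
  assert (Hint : forall k : nat, (0 < k)%nat ->
            Un_cv (fun i => rpow (padic_abs (p i) (inject_Z (Z.of_nat k))) (w i)) 1).
  { intros k Hk. apply (cv_ext (fun i => mu_Qp (p i) (w i) (s i) (Z.of_nat k :: nil))).
    - intros. apply mu_Qp_const; auto.
    - rewrite <- (mu_Q0_const r (Z.of_nat k)) by lia. apply H. }
  split; auto.
  apply (cv0_of_mul_cv1 _ (fun i => rpow (padic_abs (p i) (inject_Z (Z.of_nat n))) (w i)));
    [intros; apply rpow_ge0|apply Hint; auto|].
  apply (cv_ext (fun i => mu_Qp (p i) (w i) (s i) (root_poly m n))).
  - intros i. unfold mu_Qp.
    rewrite (qp_abs_ext (p i) (Hp i) _ (fun j => inject_Z (Z.of_nat n) * (s i j - r))%Q)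
      by (intros; apply evalQ_root_poly; auto).
    rewrite qp_abs_scale, rpow_mult by auto using padic_abs_ge0, qp_abs_ge0. ring.
  - assert (E : mu_Q0 r (root_poly m n) = 0)
      by (apply mu_Q0_eq0_iff; rewrite evalQ_root_poly by auto; unfold r; ring).
    rewrite <- E. apply H.
Qed.

Section Sufficiency.
Hypothesis Hint : forall k : nat, (0 < k)%nat ->
  Un_cv (fun i => rpow (padic_abs (p i) (inject_Z (Z.of_nat k))) (w i)) 1.

Lemma rpow_padic_abs_Z_cv1 z : z <> 0%Z -> Un_cv (fun i => rpow (padic_abs (p i) (inject_Z z)) (w i)) 1.
Proof.
  intros Hz.
  apply (cv_ext (fun i => rpow (padic_abs (p i) (inject_Z (Z.of_nat (Z.to_nat (Z.abs z))))) (w i))).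
  - intros i. f_equal. rewrite Z2Nat.id by lia. destruct (Z.abs_spec z) as [[_ ->]|[_ ->]]; auto.
    rewrite inject_Z_opp, padic_abs_opp; auto.
  - apply Hint. lia.
Qed.

Lemma rpow_padic_abs_frac_eventually_le2 : eventually (fun i => rpow (padic_abs (p i) r) (w i) <= 2).
Proof.
  destruct (Z.eq_dec m 0) as [Hm|Hm].
  - exists O. intros i _. rewrite padic_abs_0, rpow_0; [lra|]. unfold r, frac_Q. rewrite Hm. reflexivity.
  - refine (eventually_mono _ _ _
      (cv_eventually_lt (fun i => rpow (padic_abs (p i) r) (w i)) 1 2 _ ltac:(lra))); [intros; lra|].
    apply (cv1_of_mul_cv1 _ (fun i => rpow (padic_abs (p i) (inject_Z (Z.of_nat n))) (w i)));
      [apply Hint; auto|].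
    apply (cv_ext (fun i => rpow (padic_abs (p i) (inject_Z m)) (w i)));
      [|apply rpow_padic_abs_Z_cv1; auto].
    intros i. rewrite <- rpow_mult, <- padic_abs_mul by auto using padic_abs_ge0.
    f_equal. apply padic_abs_Qeq; auto. rewrite (frac_Q_spec m n Hn). unfold r. ring.
Qed.

Hypothesis Hdist : Un_cv (fun i => rpow (qp_abs (p i) (fun j => s i j - r)%Q) (w i)) 0.

Lemma rpow_qp_abs_evalQ_sub_cv0 P :
  Un_cv (fun i => rpow (qp_abs (p i) (fun j => evalQ P (s i j) - evalQ P r)%Q) (w i)) 0.
Proof.
  set (a i := qp_abs (p i) (fun j => s i j - r)%Q).
  apply (cv_squeeze0 _ (fun i => 2 ^ length P * rpow (a i) (w i))).
  - refine (eventually_mono _ _ _ (eventually_and _ _ rpow_padic_abs_frac_eventually_le2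
                                   (cv_eventually_lt _ _ 1 Hdist ltac:(lra)))).
    intros i [Hr Ha1]. fold (a i) in Ha1. specialize (Hw i).
    assert (Ha0 : 0 <= a i) by (apply qp_abs_ge0; auto).
    assert (Ha : a i < 1) by (rewrite <- (rpow_1 (w i)) in Ha1; apply rpow_lt_inv in Ha1; lra).
    set (C := Rmax 1 (padic_abs (p i) r)).
    assert (HC : 1 <= C) by apply Rmax_l.
    split; [apply rpow_ge0|].
    eapply Rle_trans; [apply rpow_le; [lra|split]|].
    + apply qp_abs_ge0; auto. apply padic_cauchy_sub_const, padic_cauchy_evalQ; auto.
    + apply (qp_abs_evalQ_sub_le (p i)); auto.
    + fold C (a i). rewrite rpow_mult, rpow_pow by (try apply pow_le; lra).
      apply Rmult_le_compat_r; [apply rpow_ge0|]. apply pow_incr. split; [apply rpow_ge0|].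
      unfold C, Rmax. destruct (Rle_dec 1 (padic_abs (p i) r)); [auto|rewrite rpow_1; lra].
  - replace 0 with (2 ^ length P * 0) by ring. apply CV_mult; [apply cv_const|exact Hdist].
Qed.

Lemma mu_Qp_cv_mu_Q0_sufficient : sn_conv (fun i => mu_Qp (p i) (w i) (s i)) (mu_Q0 r).
Proof.
  intros P. pose proof (rpow_qp_abs_evalQ_sub_cv0 P) as HD.
  destruct (Qeq_dec (evalQ P r) 0) as [E|E].
  - rewrite (proj2 (mu_Q0_eq0_iff r P) E). refine (cv_ext _ _ _ _ HD).
    intros i. unfold mu_Qp. f_equal. apply qp_abs_ext; auto. intros j. rewrite E. ring.
  - rewrite (proj2 (mu_Q0_eq1_iff r P) E).
    set (b i := padic_abs (p i) (evalQ P r)).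
    assert (Hb : Un_cv (fun i => rpow (b i) (w i)) 1).
    { set (h := homog m (Z.of_nat n) P).
      assert (Hh : h <> 0%Z) by (unfold h; rewrite homog_eq0_iff; auto).
      apply (cv1_of_mul_cv1 _
        (fun i => rpow (padic_abs (p i) (inject_Z (Z.of_nat n ^ Z.of_nat (length P)))) (w i))).
      { apply rpow_padic_abs_Z_cv1, Z.pow_nonzero; lia. }
      apply (cv_ext (fun i => rpow (padic_abs (p i) (inject_Z h)) (w i)));
        [|apply rpow_padic_abs_Z_cv1; auto].
      intros i. unfold b. rewrite <- rpow_mult, <- padic_abs_mul by auto using padic_abs_ge0.
      f_equal. apply padic_abs_Qeq; auto.
      unfold h. rewrite inject_Z_homog by lia. unfold r, frac_Q. ring. }
    apply (cv_eventually_ext (fun i => rpow (b i) (w i))); auto.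
    refine (eventually_mono _ _ _ (eventually_and _ _ (cv_eventually_lt _ _ (1 / 2) HD ltac:(lra))
                                                     (cv_eventually_gt _ _ (1 / 2) Hb ltac:(lra)))).
    intros i [H1 H2].
    assert (Db : qp_abs (p i) (fun j => evalQ P (s i j) - evalQ P r)%Q < b i)
      by (apply (rpow_lt_inv _ _ (w i)); auto; [apply padic_abs_ge0; auto|lra]).
    unfold mu_Qp. f_equal. symmetry. apply qp_abs_eventually_const.
    refine (eventually_mono _ _ _ (qp_abs_lt_eventually (p i) (Hp i) _ _ _ Db));
      [|apply padic_cauchy_sub_const, padic_cauchy_evalQ; auto].
    intros j Hj.
    rewrite (padic_abs_Qeq (p i) (Hp i) _ (evalQ P r + (evalQ P (s i j) - evalQ P r))) by ring.
    apply padic_abs_dominant; auto.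
Qed.

End Sufficiency.
End ConvergenceToQ0FromQp.

Theorem theorem3p8 (q m : Z) (n : nat)
  (Hq : prime q) (Hn : (0 < n)%nat) (Hgcd : Z.gcd m (Z.of_nat n) = 1%Z) :
  (* (b) *)
  (open_in_Amin U_R /\ open_in_Amin (U_Qp q) /\
   open_in_Amin (fun f => Fp_pts q f \/ U_Qp q f)) /\
  (* (c) *)
  (discrete_subspace Q0_pts /\
   discrete_subspace (fun f => exists p, prime p /\ Fp_pts p f)) /\
  (* (d) *)
  (forall (p : nat -> Z) (w : nat -> R) (s : nat -> nat -> Q),
     (forall i, prime (p i)) -> (forall i, 0 < w i) ->
     (forall i, padic_cauchy (p i) (s i)) ->
     (sn_conv (fun i => mu_Qp (p i) (w i) (s i)) (mu_Fp q (Z.of_nat n)) <->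
      (cv_infty w /\
       exists i0, forall i, (i0 <= i)%nat ->
         p i = q /\ in_n_plus_qZq q (Z.of_nat n) (s i)))) /\
  (* (e) *)
  (forall (p : nat -> Z) (k : nat -> Z),
     (forall i, prime (p i)) ->
     (sn_conv (fun i => mu_Fp (p i) (k i)) (mu_Q0 (frac_Q m n)) <->
      (cv_infty (fun i => IZR (p i)) /\
       exists i0, forall i, (i0 <= i)%nat ->
         ~ (p i | Z.of_nat n)%Z /\ (p i | Z.of_nat n * k i - m)%Z))) /\
  (* (f) *)
  (forall (v t : nat -> R),
     (forall i, 0 < v i <= 1) ->
     (sn_conv (fun i => mu_R (v i) (t i)) (mu_Q0 (frac_Q m n)) <->
      (Un_cv v 0 /\
       Un_cv (fun i => rpow (Rabs (t i - Q2R (frac_Q m n))) (v i)) 0))) /\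
  (* (g) *)
  (forall (p : nat -> Z) (w : nat -> R) (s : nat -> nat -> Q),
     (forall i, prime (p i)) -> (forall i, 0 < w i) ->
     (forall i, padic_cauchy (p i) (s i)) ->
     (sn_conv (fun i => mu_Qp (p i) (w i) (s i)) (mu_Q0 (frac_Q m n)) <->
      ((forall k : nat, (0 < k)%nat ->
          Un_cv (fun i => rpow (padic_abs (p i) (inject_Z (Z.of_nat k))) (w i)) 1) /\
       Un_cv (fun i => rpow (qp_abs (p i) (fun j => s i j - frac_Q m n)%Q) (w i)) 0))).
Proof.
  split; [split; [|split]|].
  { apply open_U_R. } { apply open_U_Qp, Hq. } { apply open_Fp_or_U_Qp, Hq. }
  split; [split; [apply discrete_Q0_pts|apply discrete_Fp_pts]|].
  split; [|split; [|split]].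
  - intros p w s Hp Hw Hs. split.
    + apply mu_Qp_cv_mu_Fp_necessary; auto.
    + intros [Hinf Hev]. apply mu_Qp_cv_mu_Fp_sufficient; auto.
  - intros p k Hp. split.
    + apply mu_Fp_cv_mu_Q0_necessary; auto.
    + intros [Hinf Hev]. apply mu_Fp_cv_mu_Q0_sufficient; auto.
  - intros v t Hv. split.
    + apply mu_R_cv_mu_Q0_necessary; auto.
    + intros [Hv0 Ht]. apply mu_R_cv_mu_Q0_sufficient; auto.
  - intros p w s Hp Hw Hs. split.
    + apply mu_Qp_cv_mu_Q0_necessary; auto.
    + intros [Hint Hdist]. apply mu_Qp_cv_mu_Q0_sufficient; auto.
Qed.
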